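(* Let $k\ge 3$ be an integer, let $$P_k(x)=-\left(x+\tfrac{k-1}{2}\right)\left(x-\tfrac{k-1}{2}\right)\prod_{i=1}^{k-1}\left(x-\left(i-\tfrac k2\right)\right)^2,$$ and let $Z_k=(X_k,Y_k)$ be the planar piecewise smooth vector field with $X_k(x,y)=(1,P_k'(x))$ for $y\ge0$ and $Y_k(x,y)=(-1,P_k'(x))$ for $y\le0$. Let $\Lambda_k=\{(x,P_k(x)):r_0\le x\le r_1\}\cup\{(x,-P_k(x)):r_0\le x\le r_1\}$ with $r_0=\frac{1-k}{2}$, $r_1=\frac{k-1}{2}$. Then $\Lambda_k$ is a compact set invariant under $Z_k$, and the time-one map $\overline{T_1}$ of $Z_k$ restricted to $\Lambda_k$ (on the metric space $(\overline{\Omega}_k,\rho_k)$ defined below) is topologically conjugate to a subshift on $2(k-1)$ symbols: there exist a subshift $K\subset\{0,1,\dots,2k-3\}^{\mathbb{Z}}$ and a homeomorphism $h:\overline{\Omega}_k\to K$ with $h\circ\overline{T_1}=\sigma|_K\circ h$.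
   Context: Switching manifold $\Sigma=\{(x,y):y=0\}=f^{-1}(0)$ with $f(x,y)=y$, $\Sigma^+=\{y\ge0\}$, $\Sigma^-=\{y\le0\}$. A planar piecewise smooth vector field (PSVF) $Z=(X,Y)$ equals the smooth field $X$ on $\Sigma^+$ and the smooth field $Y$ on $\Sigma^-$. Write $Wf(p)=\langle\nabla f(p),W(p)\rangle$, $W^2f(p)=\langle\nabla(Wf)(p),W(p)\rangle$. Regions of $\Sigma$: crossing $\Sigma^c=\{Xf\cdot Yf>0\}$, split into $\Sigma^{c+}$ ($Xf,Yf>0$) and $\Sigma^{c-}$ ($Xf,Yf<0$); sliding $\Sigma^s=\{Xf<0<Yf\}$; escaping $\Sigma^e=\{Yf<0<Xf\}$. A point $p\in\Sigma$ with $Xf(p)=0$ is a tangential singularity of $X$; a fold of $X$ if $X^2f(p)\neq0$, visible if $X^2f(p)>0$, invisible if $X^2f(p)<0$; for $Y$ a fold is visible if the $Y$-orbit of $p$ lies locally in $\Sigma^-$ ($Y^2f(p)<0$), invisible otherwise. A two-fold is a fold of both fields. A tangential singularity is singular if it is an invisible tangency of both $X$ and $Y$, regular otherwise. On $\overline{\Sigma^s\cup\Sigma^e}$ the sliding field is $Z^T=(Yf\,X-Xf\,Y)/(Yf-Xf)$. Local trajectories (Filippov convention): off $\Sigma$ follow $X$ (if $y>0$) or $Y$ (if $y<0$); through $p\in\Sigma^{c+}$ follow $Y$ for $t\le0$ and $X$ for $t\ge0$ (time-reversed for $\Sigma^{c-}$); through $p\in\Sigma^e$ follow $Z^T$ for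 $t\le0$ and one of $X,Y,Z^T$ for $t\ge0$ (time-reversed for $\Sigma^s$); through a regular tangential singularity follow one of the flows of $X,Y,Z^T$ for $t\le0$ and one of them for $t\ge0$; a singular tangential singularity is stationary. A global trajectory is a map $\gamma:\mathbb{R}\to\mathbb{R}^2$ obtained by concatenating orientation-preserving local trajectories $\sigma_i$ on $[t_i,t_{i+1}]$, $i\in\mathbb{Z}$, with $\sigma_i(t_{i+1})=\sigma_{i+1}(t_{i+1})$ and $t_i\to\pm\infty$ as $i\to\pm\infty$. A set $\Lambda$ is invariant for $Z$ if every global trajectory $\gamma$ with $\gamma(0)\in\Lambda$ satisfies $\gamma(\mathbb{R})\subset\Lambda$. Construction: $p_j=j-\frac k2$ for $j=1,\dots,k-1$. $\Omega_k$ is the set of global trajectories $\gamma$ of $Z_k$ with $\gamma(0)\in\Lambda_k$; $T_1:\Omega_k\to\Omega_k$, $T_1(\gamma)(t)=\gamma(t+1)$. Arcs: $I_0=\{(x,\pm P_k(x)): r_0\le x<p_1\}$; for $j=1,\dots,k-2$, $I_{2j-1}=\{(x,P_k(x)):p_j<x<p_{j+1}\}$ and $I_{2j}=\{(x,-P_k(x)):p_j<x<p_{j+1}\}$; $I_{2k-3}=\{(x,\pm P_k(x)):p_{k-1}<x\le r_1\}$. Itinerary $s:\Omega_k\to\{0,\dots,2k-3\}^{\mathbb{Z}}$: $s(\gamma)_j=n$ if $\gamma(j)\in I_n$, and $s(\gamma)_j=m$ if $\gamma(j)=(p_l,0)$ for some $l$ and $\gamma(j+\frac12)\in I_m$. Set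 $\gamma_1\sim\gamma_2$ iff $s(\gamma_1)=s(\gamma_2)$, $\overline{\Omega}_k=\Omega_k/\sim$. Each class $\overline\gamma$ has a representative $\gamma^*$ with $\gamma^*(0)\in\{(p_l,0):l=1,\dots,k-1\}$; $\rho_k(\overline{\gamma}_1,\overline{\gamma}_2)=\sum_{i\in\mathbb{Z}}2^{-|i|}d_H(\gamma_1^*([i,i+1]),\gamma_2^*([i,i+1]))$ with $d_H$ the Hausdorff distance (Euclidean metric) and $\gamma_i^*$ such representatives. $\overline{T_1}(\overline\gamma)=\overline{T_1(\gamma)}$ (well defined). On $\{0,\dots,2k-3\}^{\mathbb{Z}}$ use the metric $d(x,y)=\sum_{j\in\mathbb{Z}}|x_j-y_j|/2^{|j|}$ (inducing the product of discrete topologies) and the shift $\sigma((a_j)_j)=(a_{j+1})_j$. A subshift is a closed subset $K$ with $\sigma(K)\subset K$ (invariant). *)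

From Stdlib Require Import Reals Lra Lia ZArith List ClassicalEpsilon.
From Coquelicot Require Import Coquelicot.
Open Scope R_scope.

Definition pt := (R * R)%type.

Definition edist (p q : pt) : R :=
  sqrt ((fst p - fst q) ^ 2 + (snd p - snd q) ^ 2).

Definition open2 (U : pt -> Prop) : Prop :=
  forall p, U p -> exists e, 0 < e /\ forall q, edist p q < e -> U q.

Definition compact2 (K : pt -> Prop) : Prop :=
  forall (I : Type) (U : I -> pt -> Prop),
    (forall i, open2 (U i)) ->
    (forall p, K p -> exists i, U i p) ->
    exists l : list I, forall p, K p -> exists i, In i l /\ U i p.

Definition field := pt -> pt.

(* W f (p) = < grad f (p), W(p) >, with grad f = (0,1) *)
Definition Wf (W : field) (p : pt) : R := 0 * fst (W p) + 1 * snd (W p).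

Definition W2f (W : field) (p : pt) : R :=
  Derive (fun x => Wf W (x, snd p)) (fst p) * fst (W p)
  + Derive (fun y => Wf W (fst p, y)) (snd p) * snd (W p).

Definition Sigma (p : pt) : Prop := snd p = 0.
Definition SigmaPlus (p : pt) : Prop := snd p >= 0.
Definition SigmaMinus (p : pt) : Prop := snd p <= 0.

Definition crossing_plus (X Y : field) (p : pt) : Prop :=
  Sigma p /\ Wf X p > 0 /\ Wf Y p > 0.
Definition crossing_minus (X Y : field) (p : pt) : Prop :=
  Sigma p /\ Wf X p < 0 /\ Wf Y p < 0.
Definition sliding (X Y : field) (p : pt) : Prop :=
  Sigma p /\ Wf X p < 0 /\ 0 < Wf Y p.
Definition escaping (X Y : field) (p : pt) : Prop :=
  Sigma p /\ Wf Y p < 0 /\ 0 < Wf X p.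

Definition slide_esc_closure (X Y : field) (p : pt) : Prop :=
  forall e, 0 < e -> exists q, (sliding X Y q \/ escaping X Y q) /\ edist p q < e.

Definition tangency (X Y : field) (p : pt) : Prop :=
  Sigma p /\ (Wf X p = 0 \/ Wf Y p = 0).
Definition invisible_X (X : field) (p : pt) : Prop :=
  Sigma p /\ Wf X p = 0 /\ W2f X p < 0.
Definition invisible_Y (Y : field) (p : pt) : Prop :=
  Sigma p /\ Wf Y p = 0 /\ W2f Y p > 0.
Definition singular_tangency (X Y : field) (p : pt) : Prop :=
  invisible_X X p /\ invisible_Y Y p.
Definition regular_tangency (X Y : field) (p : pt) : Prop :=
  tangency X Y p /\ ~ singular_tangency X Y p.

Definition ZT (X Y : field) : field := fun p =>
  ((Wf Y p * fst (X p) - Wf X p * fst (Y p)) / (Wf Y p - Wf X p),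
   (Wf Y p * snd (X p) - Wf X p * snd (Y p)) / (Wf Y p - Wf X p)).

Definition int_curve (W : field) (a b : R) (phi : R -> pt) : Prop :=
  a <= b /\
  continuous_on (fun t => a <= t <= b) phi /\
  (forall t, a < t < b -> is_derive phi t (W (phi t))).

Definition followX (X Y : field) (a b : R) (phi : R -> pt) : Prop :=
  int_curve X a b phi /\ forall t, a <= t <= b -> SigmaPlus (phi t).
Definition followY (X Y : field) (a b : R) (phi : R -> pt) : Prop :=
  int_curve Y a b phi /\ forall t, a <= t <= b -> SigmaMinus (phi t).
Definition followZT (X Y : field) (a b : R) (phi : R -> pt) : Prop :=
  int_curve (ZT X Y) a b phi /\
  forall t, a <= t <= b -> slide_esc_closure X Y (phi t).
Definition followAny (X Y : field) (a b : R) (phi : R -> pt) : Prop :=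
  followX X Y a b phi \/ followY X Y a b phi \/ followZT X Y a b phi.

(* local trajectory phi through p, defined on [a,b] with a <= 0 <= b,
   phi 0 = p (Filippov convention) *)
Definition local_traj (X Y : field) (p : pt) (a b : R) (phi : R -> pt) : Prop :=
  a <= 0 <= b /\ phi 0 = p /\
  ( (snd p > 0 /\ followX X Y a b phi)
  \/ (snd p < 0 /\ followY X Y a b phi)
  \/ (crossing_plus X Y p /\ followY X Y a 0 phi /\ followX X Y 0 b phi)
  \/ (crossing_minus X Y p /\ followX X Y a 0 phi /\ followY X Y 0 b phi)
  \/ (escaping X Y p /\ followZT X Y a 0 phi /\ followAny X Y 0 b phi)
  \/ (sliding X Y p /\ followAny X Y a 0 phi /\ followZT X Y 0 b phi)
  \/ (regular_tangency X Y p /\ followAny X Y a 0 phi /\ followAny X Y 0 b phi)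
  \/ (singular_tangency X Y p /\ forall t, a <= t <= b -> phi t = p)).

Definition global_traj (X Y : field) (gamma : R -> pt) : Prop :=
  exists tt : Z -> R,
    (forall i, tt i < tt (i + 1)%Z) /\
    (forall M, exists N, forall i, (N <= i)%Z -> M < tt i) /\
    (forall M, exists N, forall i, (i <= N)%Z -> tt i < M) /\
    (forall i, exists (p : pt) (s a b : R) (phi : R -> pt),
        local_traj X Y p a b phi /\
        a <= tt i - s /\ tt (i + 1)%Z - s <= b /\
        forall t, tt i <= t <= tt (i + 1)%Z -> gamma t = phi (t - s)).

Definition invariant (X Y : field) (L : pt -> Prop) : Prop :=
  forall gamma, global_traj X Y gamma -> L (gamma 0) ->
    forall t, L (gamma t).

Fixpoint prodf (n : nat) (f : nat -> R) : R :=
  match n with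
  | O => 1
  | S m => prodf m f * f (S m)
  end.

Definition Pk (k : nat) (x : R) : R :=
  - (x + (INR k - 1) / 2) * (x - (INR k - 1) / 2)
  * prodf (k - 1) (fun i => (x - (INR i - INR k / 2)) ^ 2).

Definition Xk (k : nat) : field := fun p => (1, Derive (Pk k) (fst p)).
Definition Yk (k : nat) : field := fun p => (-1, Derive (Pk k) (fst p)).

Definition r0 (k : nat) : R := (1 - INR k) / 2.
Definition r1 (k : nat) : R := (INR k - 1) / 2.
Definition pj (k j : nat) : R := INR j - INR k / 2.

Definition Lambda (k : nat) (q : pt) : Prop :=
  r0 k <= fst q <= r1 k /\ (snd q = Pk k (fst q) \/ snd q = - Pk k (fst q)).

Definition InArc (k n : nat) (q : pt) : Prop :=
  (n = 0%nat /\ r0 k <= fst q < pj k 1 /\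
     (snd q = Pk k (fst q) \/ snd q = - Pk k (fst q)))
  \/ (exists j, (1 <= j <= k - 2)%nat /\ n = (2 * j - 1)%nat /\
        pj k j < fst q < pj k (S j) /\ snd q = Pk k (fst q))
  \/ (exists j, (1 <= j <= k - 2)%nat /\ n = (2 * j)%nat /\
        pj k j < fst q < pj k (S j) /\ snd q = - Pk k (fst q))
  \/ (n = (2 * k - 3)%nat /\ pj k (k - 1) < fst q <= r1 k /\
        (snd q = Pk k (fst q) \/ snd q = - Pk k (fst q))).

Definition IsTangPt (k : nat) (q : pt) : Prop :=
  exists l, (1 <= l <= k - 1)%nat /\ q = (pj k l, 0).

Definition Omega (k : nat) (gamma : R -> pt) : Prop :=
  global_traj (Xk k) (Yk k) gamma /\ Lambda k (gamma 0).

Definition T1 (gamma : R -> pt) : R -> pt := fun t => gamma (t + 1).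

Definition itin_at (k : nat) (gamma : R -> pt) (j : Z) (n : nat) : Prop :=
  InArc k n (gamma (IZR j))
  \/ (IsTangPt k (gamma (IZR j)) /\ InArc k n (gamma (IZR j + / 2))).

Definition itin (k : nat) (gamma : R -> pt) : Z -> nat :=
  fun j => epsilon (inhabits 0%nat) (fun n => itin_at k gamma j n).

Definition equiv_traj (k : nat) (g1 g2 : R -> pt) : Prop :=
  itin k g1 = itin k g2.

(* chosen representative gamma* of the class of gamma, with gamma*(0) a
   tangency point (gamma itself if no such representative exists) *)
Definition rep (k : nat) (gamma : R -> pt) : R -> pt :=
  epsilon (inhabits gamma)
    (fun g => Omega k g /\ equiv_traj k g gamma /\ IsTangPt k (g 0)).

Definition sumZ (u : Z -> R) : R :=
  Series (fun n => u (Z.of_nat n)) + Series (fun n => u (- Z.of_nat (S n))%Z).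

Definition dist_pt_set (p : pt) (B : pt -> Prop) : R :=
  real (Glb_Rbar (fun r => exists b, B b /\ r = edist p b)).
Definition hausdorff (A B : pt -> Prop) : R :=
  Rmax (real (Lub_Rbar (fun r => exists a, A a /\ r = dist_pt_set a B)))
       (real (Lub_Rbar (fun r => exists b, B b /\ r = dist_pt_set b A))).

Definition image_on (gamma : R -> pt) (a b : R) (q : pt) : Prop :=
  exists t, a <= t <= b /\ q = gamma t.

Definition rho (k : nat) (g1 g2 : R -> pt) : R :=
  sumZ (fun i => (/ 2) ^ Z.abs_nat i *
     hausdorff (image_on (rep k g1) (IZR i) (IZR i + 1))
               (image_on (rep k g2) (IZR i) (IZR i + 1))).

Definition symseq (k : nat) (a : Z -> nat) : Prop :=
  forall j, (a j <= 2 * k - 3)%nat.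

Definition dshift (a b : Z -> nat) : R :=
  sumZ (fun j => Rabs (INR (a j) - INR (b j)) / 2 ^ Z.abs_nat j).

Definition sigma_shift (a : Z -> nat) : Z -> nat := fun j => a (j + 1)%Z.

Definition subshift (k : nat) (K : (Z -> nat) -> Prop) : Prop :=
  (forall a, K a -> symseq k a) /\
  (forall a, symseq k a ->
     (forall e, 0 < e -> exists b, K b /\ dshift a b < e) -> K a) /\
  (forall a, K a -> K (sigma_shift a)).

From Stdlib Require Import Reals ZArith Lra Lia List Zeven Classical ClassicalEpsilon.
From Stdlib Require Import PropExtensionality FunctionalExtensionality.
From Coquelicot Require Import Coquelicot.
Open Scope R_scope.

(** On [Lambda k] the two fields never slide, escape or meet in a singular
    tangency, so a trajectory staying in [Lambda k] is glued from explicit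
    orbits [t |-> (c +- t, +- P_k (c +- t))].  Between two consecutive zeros
    of [P_k] such an orbit runs along an arc in unit time, around [r0] and
    [r1] it bounces back in time [1/2 + 1/2], and at a tangency point
    [(p_l, 0)] it may continue along either neighbouring arc.  Hence every
    trajectory is, up to a phase, the concatenation of unit-time arcs
    [Arc n] indexed by an admissible sequence (each arc starts where the
    previous one ends), and every admissible sequence is realised.  The
    itinerary is therefore a bijection from the classes onto this subshift
    of finite type, it turns [T1] into the shift, and since distinct arcs
    are at positive Hausdorff distance, itineraries agree on [|i| <= N]
    exactly when the trajectories are [rho]-close, which gives continuity
    in both directions. *)

Local Notation R2 := (prod_NormedModule R_AbsRing R_NormedModule R_NormedModule).

Lemma is_derive_fst (phi : R -> pt) t (l : pt) :
  is_derive phi t l -> is_derive (fun u => fst (phi u)) t (fst l).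
Proof.
  intro H. unfold is_derive in *.
  eapply filterdiff_ext_lin.
  - apply (filterdiff_comp' phi (fun p : R2 => fst p) t _ (fun p : R2 => fst p) H).
    apply filterdiff_linear, is_linear_fst.
  - reflexivity.
Qed.

Lemma is_derive_snd (phi : R -> pt) t (l : pt) :
  is_derive phi t l -> is_derive (fun u => snd (phi u)) t (snd l).
Proof.
  intro H. unfold is_derive in *.
  eapply filterdiff_ext_lin.
  - apply (filterdiff_comp' phi (fun p : R2 => snd p) t _ (fun p : R2 => snd p) H).
    apply filterdiff_linear, is_linear_snd.
  - reflexivity.
Qed.

Lemma is_derive_pair (f g : R -> R) t a b :
  is_derive f t a -> is_derive g t b -> is_derive (fun u => (f u, g u) : pt) t (a, b).
Proof.
  intros Hf Hg. unfold is_derive in *.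
  eapply filterdiff_ext_lin.
  - apply (filterdiff_comp'_2 f g (fun x y => (x, y) : R2) t _ _
             (fun x y => (x, y)) Hf Hg).
    apply filterdiff_linear.
    apply is_linear_ext with (l1 := fun x => x). intros [x y]; reflexivity.
    apply is_linear_id.
  - reflexivity.
Qed.

Lemma is_derive_0_const (g : R -> R) a b :
  (forall t, a < t < b -> is_derive g t 0) ->
  forall t1 t2, a < t1 < b -> a < t2 < b -> g t1 = g t2.
Proof.
  intros H t1 t2 H1 H2.
  assert (Hin : forall x, Rmin t1 t2 <= x <= Rmax t1 t2 -> a < x < b).
  { intros x Hx. destruct (Rle_dec t1 t2);
      [rewrite Rmin_left, Rmax_right in Hx by lra | rewrite Rmin_right, Rmax_left in Hx by lra];
      lra. }
  destruct (MVT_gen g t1 t2 (fun _ => 0)) as [c [_ Ec]].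
  - intros x Hx. apply H, Hin. lra.
  - intros x Hx. apply continuity_pt_filterlim, (ex_derive_continuous g x).
    exists 0. apply H, Hin, Hx.
  - lra.
Qed.

Lemma continuous_on_eps (phi : R -> pt) a b u :
  continuous_on (fun t => a <= t <= b) phi -> a <= u <= b ->
  forall e, 0 < e -> exists d, 0 < d /\ forall t, a <= t <= b -> Rabs (t - u) < d ->
    Rabs (fst (phi t) - fst (phi u)) < e /\ Rabs (snd (phi t) - snd (phi u)) < e.
Proof.
  intros Hc Hu e He.
  destruct (Hc u Hu (fun q => Rabs (fst q - fst (phi u)) < e /\ Rabs (snd q - snd (phi u)) < e))
    as [d Hd].
  - exists (mkposreal e He). intros [y1 y2] [B1 B2]. split; assumption.
  - exists d; split; [apply cond_pos|]. intros t Ht Htu. apply Hd; assumption.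
Qed.

Lemma exists_interior_near a b u d :
  a < b -> a <= u <= b -> 0 < d -> exists t, a < t < b /\ Rabs (t - u) < d.
Proof.
  intros Hab Hu Hd.
  assert (0 < Rmin d (b - a)) by (apply Rmin_pos; lra).
  pose proof (Rmin_l d (b - a)). pose proof (Rmin_r d (b - a)).
  destruct (Rlt_or_le u ((a + b) / 2)).
  - exists (u + Rmin d (b - a) / 4). split; [lra|]. rewrite Rabs_right; lra.
  - exists (u - Rmin d (b - a) / 4). split; [lra|]. rewrite Rabs_left; lra.
Qed.

Lemma Req_of_close (x y : R) : (forall e, 0 < e -> Rabs (x - y) < 2 * e) -> x = y.
Proof.
  intros H. destruct (Req_dec x y) as [|n]; [assumption|].
  assert (0 < Rabs (x - y)) by (apply Rabs_pos_lt; lra).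
  specialize (H (Rabs (x - y) / 2) ltac:(lra)). lra.
Qed.

Lemma continuous_within_eq (f g : R -> R) a b u :
  a < b -> a <= u <= b ->
  (forall e, 0 < e -> exists d, 0 < d /\
     forall t, a <= t <= b -> Rabs (t - u) < d -> Rabs (f t - f u) < e) ->
  continuity_pt g u -> (forall t, a < t < b -> f t = g t) -> f u = g u.
Proof.
  intros Hab Hu Hf Hg E. apply Req_of_close. intros e He.
  destruct (Hf e He) as [d1 [Hd1 P1]].
  destruct (Hg e He) as [d2 [Hd2 P2]].
  destruct (exists_interior_near a b u (Rmin d1 d2) Hab Hu) as [t [Ht Htu]].
  { apply Rmin_pos; lra. }
  pose proof (Rmin_l d1 d2). pose proof (Rmin_r d1 d2).
  assert (Q1 : Rabs (f t - f u) < e) by (apply P1; lra).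
  assert (Q2 : Rabs (g t - g u) < e).
  { destruct (Req_dec t u) as [->|ntu]; [rewrite Rminus_diag, Rabs_R0; lra|].
    apply P2. split; [split; [constructor|auto]|]. simpl. unfold R_dist. lra. }
  rewrite E in Q1 by assumption.
  replace (f u - g u) with (- (g t - f u) + (g t - g u)) by ring.
  eapply Rle_lt_trans; [apply Rabs_triang|]. rewrite Rabs_Ropp. lra.
Qed.

Lemma continuous_on_eq_closed (phi : R -> pt) (G1 G2 : R -> R) a b :
  a < b -> continuous_on (fun t => a <= t <= b) phi ->
  (forall t, continuity_pt G1 t) -> (forall t, continuity_pt G2 t) ->
  (forall t, a < t < b -> phi t = (G1 t, G2 t)) ->
  forall t, a <= t <= b -> phi t = (G1 t, G2 t).
Proof.
  intros Hab Hc C1 C2 E u Hu.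
  rewrite (surjective_pairing (phi u)). f_equal.
  - apply (continuous_within_eq (fun t => fst (phi t)) G1 a b u Hab Hu); auto.
    + intros e He. destruct (continuous_on_eps phi a b u Hc Hu e He) as [d [Hd P]].
      exists d. split; [assumption|]. intros t Ht Htu. apply P; assumption.
    + intros t Ht. rewrite E by assumption. reflexivity.
  - apply (continuous_within_eq (fun t => snd (phi t)) G2 a b u Hab Hu); auto.
    + intros e He. destruct (continuous_on_eps phi a b u Hc Hu e He) as [d [Hd P]].
      exists d. split; [assumption|]. intros t Ht Htu. apply P; assumption.
    + intros t Ht. rewrite E by assumption. reflexivity.
Qed.

(* Taylor at a double zero: if [f''(x0) < 0], then [f'] and hence [f] are
   negative just to the right of [x0]. *)
Lemma second_derivative_nonneg (f : R -> R) x0 d D :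
  0 < d -> (forall x, ex_derive f x) -> f x0 = 0 -> Derive f x0 = 0 ->
  (forall x, x0 < x < x0 + d -> 0 <= f x) ->
  is_derive (Derive f) x0 D -> 0 <= D.
Proof.
  intros Hd Hf E0 D0 Hpos HD.
  destruct (Rle_or_lt 0 D) as [|Hneg]; [assumption|]. exfalso.
  apply is_derive_Reals in HD.
  destruct (HD (- D / 2)) as [d1 Hd1]; [lra|].
  set (h := Rmin d d1 / 2).
  assert (Hh : 0 < h < d /\ h < d1).
  { unfold h. pose proof (Rmin_l d d1). pose proof (Rmin_r d d1).
    pose proof (cond_pos d1). assert (0 < Rmin d d1) by (apply Rmin_pos; lra). lra. }
  destruct (MVT_cor2 f (Derive f) x0 (x0 + h)) as [c [Ec Hc]]; [lra| |].
  { intros c _. apply is_derive_Reals, Derive_correct, Hf. }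
  assert (Dc : Derive f c < 0).
  { specialize (Hd1 (c - x0)). replace (x0 + (c - x0)) with c in Hd1 by ring.
    rewrite D0 in Hd1.
    assert (Habs : Rabs ((Derive f c - 0) / (c - x0) - D) < - D / 2).
    { apply Hd1; [lra|]. rewrite Rabs_right; lra. }
    apply Rabs_def2 in Habs. destruct Habs as [H1 H2].
    destruct (Rle_or_lt 0 (Derive f c)); [|assumption].
    assert (0 <= (Derive f c - 0) / (c - x0)).
    { unfold Rdiv. apply Rmult_le_pos; [lra|]. left; apply Rinv_0_lt_compat; lra. }
    lra. }
  assert (f (x0 + h) < 0) by (rewrite E0 in Ec; nra).
  specialize (Hpos (x0 + h)). lra.
Qed.

Inductive poly_fun : (R -> R) -> Prop :=
| poly_fun_const c : poly_fun (fun _ => c)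
| poly_fun_id : poly_fun (fun x => x)
| poly_fun_plus f g : poly_fun f -> poly_fun g -> poly_fun (fun x => f x + g x)
| poly_fun_mult f g : poly_fun f -> poly_fun g -> poly_fun (fun x => f x * g x)
| poly_fun_ext f g : poly_fun f -> (forall x, f x = g x) -> poly_fun g.

Lemma poly_fun_Derive f : poly_fun f -> (forall x, ex_derive f x) /\ poly_fun (Derive f).
Proof.
  induction 1 as [c| |f g _ [Hf Sf] _ [Hg Sg]|f g Pf [Hf Sf] Pg [Hg Sg]|f g _ [Hf Sf] E].
  - split; [intros; apply ex_derive_const|].
    apply poly_fun_ext with (fun _ => 0); [constructor|]. intros; rewrite Derive_const; auto.
  - split; [intros; apply ex_derive_id|].
    apply poly_fun_ext with (fun _ => 1); [constructor|]. intros; rewrite Derive_id; auto.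
  - split; [intros x; exact (ex_derive_plus f g x (Hf x) (Hg x))|].
    apply poly_fun_ext with (fun x => Derive f x + Derive g x); [constructor; auto|].
    intros x; symmetry; apply (Derive_plus f g x); auto.
  - split; [intros x; exact (ex_derive_mult f g x (Hf x) (Hg x))|].
    apply poly_fun_ext with (fun x => Derive f x * g x + f x * Derive g x).
    + constructor; constructor; auto.
    + intros x; symmetry; apply (Derive_mult f g x); auto.
  - replace g with f by (apply functional_extensionality; auto). auto.
Qed.

Lemma is_lub_approx (E : R -> Prop) m w : is_lub E m -> w < m -> exists v, E v /\ w < v.
Proof.
  intros [Hub Hl] Hw. apply NNPP. intros N.
  assert (m <= w); [|lra].
  apply Hl. intros v Ev. destruct (Rle_or_lt v w); [assumption|]. exfalso; eauto.
Qed.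

Lemma partition_index_aux (tt : Z -> R) t : forall n N,
  tt N <= t -> t < tt (N + Z.of_nat n)%Z -> exists i, tt i <= t < tt (i + 1)%Z.
Proof.
  induction n; intros N H1 H2.
  - rewrite Z.add_0_r in H2. lra.
  - destruct (Rle_or_lt (tt (N + 1)%Z) t).
    + apply (IHn (N + 1)%Z); [assumption|].
      replace (N + 1 + Z.of_nat n)%Z with (N + Z.of_nat (S n))%Z by lia. assumption.
    + exists N; split; assumption.
Qed.

Lemma partition_index (tt : Z -> R) t :
  (forall M, exists N, forall i, (N <= i)%Z -> M < tt i) ->
  (forall M, exists N, forall i, (i <= N)%Z -> tt i < M) ->
  exists i, tt i <= t < tt (i + 1)%Z.
Proof.
  intros Hup Hdn. destruct (Hdn t) as [N0 H0]. destruct (Hup t) as [N1 H1].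
  specialize (H0 N0 (Z.le_refl _)).
  destruct (Z.le_gt_cases N0 N1).
  - apply (partition_index_aux tt t (Z.to_nat (N1 - N0)) N0); [lra|].
    rewrite Z2Nat.id by lia. replace (N0 + (N1 - N0))%Z with N1 by lia. apply H1; lia.
  - specialize (H1 N0 ltac:(lia)). lra.
Qed.

Lemma partition_index_left_open (tt : Z -> R) t :
  (forall i, tt i < tt (i + 1)%Z) ->
  (forall M, exists N, forall i, (N <= i)%Z -> M < tt i) ->
  (forall M, exists N, forall i, (i <= N)%Z -> tt i < M) ->
  exists i, tt i < t <= tt (i + 1)%Z.
Proof.
  intros mono Hup Hdn. destruct (partition_index tt t Hup Hdn) as [i [[Hi|Hi] Hi']].
  - exists i; lra.
  - exists (i - 1)%Z. replace (i - 1 + 1)%Z with i by lia.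
    specialize (mono (i - 1)%Z). replace (i - 1 + 1)%Z with i in mono by lia. lra.
Qed.

Lemma pow_half_pos n : 0 < (/2) ^ n.
Proof. apply pow_lt; lra. Qed.

Lemma pow_half_le n m : (n <= m)%nat -> (/2) ^ m <= (/2) ^ n.
Proof.
  intros H. replace m with (n + (m - n))%nat by lia. generalize (m - n)%nat. intros d.
  induction d; [rewrite Nat.add_0_r; lra|].
  replace (n + S d)%nat with (S (n + d)) by lia. simpl. pose proof (pow_half_pos (n + d)). lra.
Qed.

Lemma pow_half_lt e : 0 < e -> exists N : nat, (/2) ^ N < e.
Proof.
  intros He. destruct (pow_lt_1_zero (/2) ltac:(rewrite Rabs_right; lra) e He) as [N HN].
  exists N. specialize (HN N (le_n _)). rewrite Rabs_right in HN; [assumption|].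
  left; apply pow_half_pos.
Qed.

Lemma is_series_half_pow : is_series (fun n => (/2) ^ n) 2.
Proof.
  assert (H := is_series_geom (/2) ltac:(rewrite Rabs_right; lra)).
  replace (/ (1 - /2)) with 2 in H by field. exact H.
Qed.

Lemma ex_series_half_pow_scal C : ex_series (fun n => C * (/2) ^ n).
Proof.
  exact (ex_series_scal_l (V := R_NormedModule) C (fun n => (/2) ^ n)
           (ex_intro _ _ is_series_half_pow)).
Qed.

Lemma Series_half_pow_scal C : Series (fun n => C * (/2) ^ n) = 2 * C.
Proof.
  rewrite Series_scal_l.
  replace (Series _) with 2 by (symmetry; apply is_series_unique, is_series_half_pow). ring.
Qed.

Section DominatedSeries.

Variable (v : nat -> R) (C : R).
Hypothesis v_dom : forall n, 0 <= v n <= C * (/2) ^ n.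

Lemma ex_series_dom : ex_series v.
Proof.
  apply (ex_series_le v (fun n => C * (/2) ^ n)); [|apply ex_series_half_pow_scal].
  intros n. rewrite Rabs_right by (destruct (v_dom n); lra). apply v_dom.
Qed.

Lemma Series_dom_ge_term j : v j <= Series v.
Proof.
  assert (L : is_lim_seq (sum_n v) (Series v)) by apply (Series_correct v ex_series_dom).
  assert (v j <= sum_n v j).
  { rewrite sum_n_Reals. destruct j; simpl; [lra|].
    pose proof (cond_pos_sum v j (fun n => proj1 (v_dom n))). lra. }
  enough (sum_n v j <= Series v) by lra.
  apply (is_lim_seq_incr_compare (sum_n v) (Series v) L).
  intros n. rewrite !sum_n_Reals. simpl. destruct (v_dom (S n)). lra.
Qed.

Lemma Series_dom_nonneg : 0 <= Series v.
Proof. pose proof (Series_dom_ge_term 0). destruct (v_dom 0%nat). lra. Qed.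

Lemma Series_dom_tail N : (forall n, (n < N)%nat -> v n = 0) -> Series v <= 2 * C * (/2) ^ N.
Proof.
  intros Z. assert (C0 : 0 <= C) by (destruct (v_dom 0%nat); simpl in *; lra).
  destruct N.
  - simpl. rewrite Rmult_1_r, <- Series_half_pow_scal.
    apply Series_le; [apply v_dom|apply ex_series_half_pow_scal].
  - rewrite (Series_incr_n v (S N)) by (apply ex_series_dom || lia). simpl pred.
    assert (E : sum_f_R0 v N = 0).
    { assert (forall m, (m <= N)%nat -> sum_f_R0 v m = 0); [|auto].
      induction m; intros Hm; simpl; [apply Z; lia|]. rewrite IHm, Z by lia. ring. }
    rewrite E, Rplus_0_l.
    replace (2 * C * (/2) ^ S N) with (Series (fun n => C * (/2) ^ S N * (/2) ^ n))
      by (rewrite Series_half_pow_scal; ring).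
    apply Series_le; [|apply ex_series_half_pow_scal].
    intros n. destruct (v_dom (S N + n)%nat) as [H0 H1]. rewrite pow_add in H1. split; lra.
Qed.

End DominatedSeries.

Lemma sumZ_dom_halves (u : Z -> R) C : (forall i, 0 <= u i <= C * (/2) ^ Z.abs_nat i) ->
  (forall n, 0 <= u (Z.of_nat n) <= C * (/2) ^ n) /\
  (forall n, 0 <= u (- Z.of_nat (S n))%Z <= C * (/2) ^ n).
Proof.
  intros H. assert (C0 : 0 <= C) by (destruct (H 0%Z); simpl in *; lra).
  split; intros n.
  - pose proof (H (Z.of_nat n)) as Hn. rewrite Zabs2Nat.id in Hn. exact Hn.
  - destruct (H (- Z.of_nat (S n))%Z) as [Ha Hb].
    replace (Z.abs_nat (- Z.of_nat (S n))) with (S n) in Hb by lia.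
    change ((/2) ^ S n) with (/2 * (/2) ^ n) in Hb. pose proof (pow_half_pos n).
    assert (0 <= C * (/2) ^ n) by (apply Rmult_le_pos; lra). split; lra.
Qed.

Lemma sumZ_ge_term (u : Z -> R) C : (forall i, 0 <= u i <= C * (/2) ^ Z.abs_nat i) ->
  forall j, u j <= sumZ u.
Proof.
  intros H j. unfold sumZ. destruct (sumZ_dom_halves u C H) as [H1 H2].
  pose proof (Series_dom_nonneg _ _ H1). pose proof (Series_dom_nonneg _ _ H2).
  destruct (Z_le_gt_dec 0 j).
  - pose proof (Series_dom_ge_term _ _ H1 (Z.to_nat j)) as H4. cbv beta in H4.
    rewrite Z2Nat.id in H4 by lia. lra.
  - pose proof (Series_dom_ge_term _ _ H2 (Z.to_nat (- j - 1))) as H4. cbv beta in H4.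
    replace (- Z.of_nat (S (Z.to_nat (- j - 1))))%Z with j in H4 by lia. lra.
Qed.

Lemma sumZ_dom_tail (u : Z -> R) C N : (forall i, 0 <= u i <= C * (/2) ^ Z.abs_nat i) ->
  (forall i, (Z.abs_nat i <= N)%nat -> u i = 0) -> sumZ u <= 4 * C * (/2) ^ N.
Proof.
  intros H Z0. unfold sumZ. destruct (sumZ_dom_halves u C H) as [H1 H2].
  assert (Series (fun n => u (Z.of_nat n)) <= 2 * C * (/2) ^ N).
  { apply (Series_dom_tail _ _ H1). intros n Hn. apply Z0. rewrite Zabs2Nat.id. lia. }
  assert (Series (fun n => u (- Z.of_nat (S n))%Z) <= 2 * C * (/2) ^ N).
  { apply (Series_dom_tail _ _ H2). intros n Hn. apply Z0. lia. }
  lra.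
Qed.

Lemma pow_half_scaled_lt C e : 0 <= C -> 0 < e -> exists N : nat, 4 * C * (/2) ^ N < e.
Proof.
  intros HC He. destruct (pow_half_lt (e / (4 * C + 1))) as [N HN].
  { apply Rdiv_lt_0_compat; lra. }
  exists N. pose proof (pow_half_pos N).
  apply (Rmult_lt_compat_r (4 * C + 1)) in HN; [|lra].
  unfold Rdiv in HN. rewrite Rmult_assoc, Rinv_l, Rmult_1_r in HN by lra. nra.
Qed.

Section ShiftMetric.

Variable M : nat.
Variables a b : Z -> nat.
Hypothesis a_bound : forall j, (a j <= M)%nat.
Hypothesis b_bound : forall j, (b j <= M)%nat.

Lemma dshift_term_bounds i :
  0 <= Rabs (INR (a i) - INR (b i)) / 2 ^ Z.abs_nat i <= INR M * (/2) ^ Z.abs_nat i.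
Proof.
  unfold Rdiv. rewrite <- pow_inv. pose proof (pow_half_pos (Z.abs_nat i)).
  split; [apply Rmult_le_pos; [apply Rabs_pos|lra]|].
  apply Rmult_le_compat_r; [lra|].
  pose proof (le_INR _ _ (a_bound i)). pose proof (le_INR _ _ (b_bound i)).
  pose proof (pos_INR (a i)). pose proof (pos_INR (b i)). apply Rabs_le. lra.
Qed.

Lemma dshift_lt_agree N : dshift a b < (/2) ^ N -> forall j, (Z.abs_nat j <= N)%nat -> a j = b j.
Proof.
  intros Hd j Hj. destruct (Nat.eq_dec (a j) (b j)) as [|ne]; [assumption|]. exfalso.
  pose proof (sumZ_ge_term _ _ dshift_term_bounds j) as G. fold (dshift a b) in G.
  assert (1 <= Rabs (INR (a j) - INR (b j))).
  { destruct (Nat.lt_total (a j) (b j)) as [c|[c|c]]; [|contradiction|];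
      apply le_INR in c; rewrite S_INR in c; [rewrite Rabs_left1|rewrite Rabs_right]; lra. }
  unfold Rdiv in G. rewrite <- pow_inv in G.
  pose proof (pow_half_pos (Z.abs_nat j)). pose proof (pow_half_le _ _ Hj). nra.
Qed.

Lemma dshift_le_of_agree N : (forall j, (Z.abs_nat j <= N)%nat -> a j = b j) ->
  dshift a b <= 4 * INR M * (/2) ^ N.
Proof.
  intros Hag. apply (sumZ_dom_tail _ _ _ dshift_term_bounds).
  intros i Hi. rewrite Hag by assumption. rewrite Rminus_diag, Rabs_R0. unfold Rdiv; ring.
Qed.

End ShiftMetric.

Lemma edist_nonneg p q : 0 <= edist p q.
Proof. apply sqrt_pos. Qed.

Lemma edist_self p : edist p p = 0.
Proof.
  unfold edist. replace ((fst p - fst p) ^ 2 + (snd p - snd p) ^ 2) with 0 by ring.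
  apply sqrt_0.
Qed.

Lemma edist_sym p q : edist p q = edist q p.
Proof. unfold edist. f_equal. ring. Qed.

Lemma edist_le_abs p q : edist p q <= Rabs (fst p - fst q) + Rabs (snd p - snd q).
Proof.
  unfold edist. set (a := fst p - fst q). set (b := snd p - snd q).
  pose proof (Rabs_pos a). pose proof (Rabs_pos b).
  rewrite <- (sqrt_square (Rabs a + Rabs b)) by lra.
  apply sqrt_le_1_alt.
  rewrite <- (pow2_abs a), <- (pow2_abs b). nra.
Qed.

Lemma edist_pos p q : p <> q -> 0 < edist p q.
Proof.
  intros H. unfold edist. apply sqrt_lt_R0.
  destruct p as [x y], q as [x' y']; simpl.
  destruct (Req_dec x x'); [destruct (Req_dec y y')|]; subst.
  - exfalso; apply H; reflexivity.
  - pose proof (pow2_gt_0 (y - y') ltac:(lra)). pose proof (pow2_ge_0 (x' - x')). lra.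
  - pose proof (pow2_gt_0 (x - x') ltac:(lra)). pose proof (pow2_ge_0 (y - y')). lra.
Qed.

Lemma real_Glb_Rbar_bounds (E : R -> Prop) x0 : E x0 -> (forall x, E x -> 0 <= x) ->
  0 <= real (Glb_Rbar E) <= x0 /\
  (forall c, (forall x, E x -> c <= x) -> c <= real (Glb_Rbar E)).
Proof.
  intros He Hpos. destruct (Glb_Rbar_correct E) as [Hlb Hg].
  assert (L0 : Rbar_le 0 (Glb_Rbar E)) by (apply Hg; intros x Ex; simpl; apply Hpos; auto).
  assert (L1 : Rbar_le (Glb_Rbar E) x0) by (apply Hlb; auto).
  destruct (Glb_Rbar E) as [l| |]; simpl in *; try contradiction.
  split; [lra|]. intros c Hc.
  assert (Rbar_le c l) by (apply Hg; intros x Ex; simpl; apply Hc; auto). assumption.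
Qed.

Lemma real_Lub_Rbar_bounds (E : R -> Prop) D : (exists x, E x) -> (forall x, E x -> 0 <= x <= D) ->
  0 <= real (Lub_Rbar E) <= D /\ (forall x, E x -> x <= real (Lub_Rbar E)).
Proof.
  intros [x0 Hx0] Hb. destruct (Lub_Rbar_correct E) as [Hub Hl].
  assert (L0 : Rbar_le (Lub_Rbar E) D) by (apply Hl; intros x Ex; simpl; apply Hb; auto).
  assert (L1 : Rbar_le x0 (Lub_Rbar E)) by (apply Hub; auto).
  destruct (Lub_Rbar E) as [l| |]; simpl in *; try contradiction.
  split; [pose proof (Hb x0 Hx0); lra|]. intros x Ex. exact (Hub x Ex).
Qed.

Lemma dist_pt_set_bounds p (B : pt -> Prop) b0 : B b0 ->
  0 <= dist_pt_set p B /\ (forall b, B b -> dist_pt_set p B <= edist p b) /\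
  (forall c, (forall b, B b -> c <= edist p b) -> c <= dist_pt_set p B).
Proof.
  intros Hb0. unfold dist_pt_set.
  assert (Hp : forall x, (exists b, B b /\ x = edist p b) -> 0 <= x).
  { intros x [b [_ ->]]. apply edist_nonneg. }
  destruct (real_Glb_Rbar_bounds _ (edist p b0) (ex_intro _ b0 (conj Hb0 eq_refl)) Hp)
    as [[G0 _] G1].
  split; [assumption|split].
  - intros b Hb.
    exact (proj2 (proj1 (real_Glb_Rbar_bounds _ _ (ex_intro _ b (conj Hb eq_refl)) Hp))).
  - intros c Hc. apply G1. intros x [b [Hb ->]]. auto.
Qed.

Lemma dist_pt_set_self p (B : pt -> Prop) : B p -> dist_pt_set p B = 0.
Proof.
  intros Hp. destruct (dist_pt_set_bounds p B p Hp) as [H0 [H1 _]].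
  specialize (H1 p Hp). rewrite edist_self in H1. lra.
Qed.

Lemma hausdorff_bounds (A B : pt -> Prop) a0 b0 D : A a0 -> B b0 ->
  (forall a b, A a -> B b -> edist a b <= D) ->
  0 <= hausdorff A B <= D /\ (forall a, A a -> dist_pt_set a B <= hausdorff A B).
Proof.
  intros Ha0 Hb0 HD. unfold hausdorff.
  assert (HA : forall x, (exists a, A a /\ x = dist_pt_set a B) -> 0 <= x <= D).
  { intros x [a [Ha ->]]. destruct (dist_pt_set_bounds a B b0 Hb0) as [P0 [P1 _]].
    specialize (P1 b0 Hb0). specialize (HD a b0 Ha Hb0). split; lra. }
  assert (HB : forall x, (exists b, B b /\ x = dist_pt_set b A) -> 0 <= x <= D).
  { intros x [b [Hb ->]]. destruct (dist_pt_set_bounds b A a0 Ha0) as [P0 [P1 _]].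
    specialize (P1 a0 Ha0). specialize (HD a0 b Ha0 Hb). rewrite edist_sym in HD. split; lra. }
  destruct (real_Lub_Rbar_bounds _ D (ex_intro _ _ (ex_intro _ a0 (conj Ha0 eq_refl))) HA)
    as [[L0 L1] L2].
  destruct (real_Lub_Rbar_bounds _ D (ex_intro _ _ (ex_intro _ b0 (conj Hb0 eq_refl))) HB)
    as [[M0 M1] M2].
  split; [split; [eapply Rle_trans; [|apply Rmax_l]; assumption|apply Rmax_lub; assumption]|].
  intros a Ha. eapply Rle_trans; [|apply Rmax_l]. apply L2. exists a; auto.
Qed.

Lemma hausdorff_self (A : pt -> Prop) a0 : A a0 -> hausdorff A A = 0.
Proof.
  intros Ha0. unfold hausdorff.
  assert (HA : forall x, (exists a, A a /\ x = dist_pt_set a A) -> 0 <= x <= 0).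
  { intros x [a [Ha ->]]. rewrite dist_pt_set_self by assumption. lra. }
  destruct (real_Lub_Rbar_bounds _ 0 (ex_intro _ _ (ex_intro _ a0 (conj Ha0 eq_refl))) HA)
    as [L _].
  replace (real (Lub_Rbar (fun r => exists a, A a /\ r = dist_pt_set a A))) with 0 by lra.
  apply Rmax_left. lra.
Qed.

Fixpoint min_upto (f : nat -> R) (M : nat) : R :=
  match M with
  | O => f O
  | S M' => Rmin (min_upto f M') (f M)
  end.

Lemma min_upto_le f M n : (n <= M)%nat -> min_upto f M <= f n.
Proof.
  induction M; intros Hn; simpl.
  - replace n with 0%nat by lia. lra.
  - destruct (Nat.eq_dec n (S M)) as [->|ne]; [apply Rmin_r|].
    eapply Rle_trans; [apply Rmin_l|]. apply IHM. lia.
Qed.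

Lemma min_upto_pos f M : (forall n, (n <= M)%nat -> 0 < f n) -> 0 < min_upto f M.
Proof.
  induction M; intros H; simpl; [apply H; lia|].
  apply Rmin_pos; [apply IHM; intros; apply H|apply H]; lia.
Qed.

Lemma compact2_union (K K1 K2 : pt -> Prop) :
  (forall p, K p <-> K1 p \/ K2 p) -> compact2 K1 -> compact2 K2 -> compact2 K.
Proof.
  intros HK C1 C2 I U Uo Cov.
  destruct (C1 I U Uo) as [l1 H1]; [intros p Hp; apply Cov, HK; left; assumption|].
  destruct (C2 I U Uo) as [l2 H2]; [intros p Hp; apply Cov, HK; right; assumption|].
  exists (l1 ++ l2). intros p Hp. destruct (proj1 (HK p) Hp) as [Hp1|Hp2].
  - destruct (H1 p Hp1) as [i [Hi Ui]]. exists i. split; [apply in_or_app; left|]; assumption.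
  - destruct (H2 p Hp2) as [i [Hi Ui]]. exists i. split; [apply in_or_app; right|]; assumption.
Qed.

Lemma graph_open_cover_local (f : R -> R) (U : pt -> Prop) x0 :
  continuity_pt f x0 -> open2 U -> U (x0, f x0) ->
  exists d, 0 < d /\ forall x, Rabs (x - x0) < d -> U (x, f x).
Proof.
  intros Hf Uo Hx0. destruct (Uo _ Hx0) as [e [He Pe]].
  destruct (Hf (e / 2) ltac:(lra)) as [d [Hd Pd]].
  exists (Rmin d (e / 2)). split; [apply Rmin_pos; lra|].
  intros x Hx. pose proof (Rmin_l d (e / 2)). pose proof (Rmin_r d (e / 2)). apply Pe.
  assert (Rabs (f x - f x0) < e / 2).
  { destruct (Req_dec x x0) as [->|ne]; [rewrite Rminus_diag, Rabs_R0; lra|].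
    apply Pd. split; [split; [constructor|auto]|]. simpl. unfold R_dist. lra. }
  eapply Rle_lt_trans; [apply edist_le_abs|]. simpl.
  rewrite <- (Rabs_Ropp (x0 - x)), <- (Rabs_Ropp (f x0 - f x)).
  replace (- (x0 - x)) with (x - x0) by ring. replace (- (f x0 - f x)) with (f x - f x0) by ring.
  lra.
Qed.

(* The largest [c] such that the graph over [[a, c]] has a finite subcover
   is [b]: a subcover up to [c] close to the supremum [m], together with the
   open set covering [(m, f m)], reaches beyond [m]. *)
Lemma compact2_graph (f : R -> R) a b : a <= b -> (forall x, continuity_pt f x) ->
  compact2 (fun q => a <= fst q <= b /\ snd q = f (fst q)).
Proof.
  intros Hab Hf I U Uo Cov.
  assert (Loc : forall x0, a <= x0 <= b ->
            exists d i, 0 < d /\ forall x, Rabs (x - x0) < d -> U i (x, f x)).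
  { intros x0 Hx0. destruct (Cov (x0, f x0) (conj Hx0 eq_refl)) as [i Hi].
    destruct (graph_open_cover_local f (U i) x0 (Hf x0) (Uo i) Hi) as [d Hd].
    exists d, i. exact Hd. }
  set (S := fun c => a <= c <= b /\
          exists l : list I, forall x, a <= x <= c -> exists i, In i l /\ U i (x, f x)).
  assert (Sb : bound S) by (exists b; intros c [Hc _]; lra).
  assert (Sa : S a).
  { split; [lra|]. destruct (Loc a ltac:(lra)) as [d [i [Hd P]]].
    exists (i :: nil). intros x Hx. exists i. split; [left; reflexivity|].
    apply P. replace x with a by lra. rewrite Rminus_diag, Rabs_R0. assumption. }
  destruct (completeness S Sb (ex_intro _ _ Sa)) as [m Hm].
  assert (Ham : a <= m) by (apply (proj1 Hm); assumption).
  assert (Hmb : m <= b) by (apply (proj2 Hm); intros c [Hc _]; lra).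
  destruct (Loc m ltac:(lra)) as [d [i [Hd P]]].
  destruct (is_lub_approx S m (m - d) Hm ltac:(lra)) as [c [[Hc [l Hl]] Hcm]].
  assert (c <= m) by (apply (proj1 Hm); split; [assumption|exists l; assumption]).
  pose proof (Rmin_l (m + d / 2) b). pose proof (Rmin_r (m + d / 2) b).
  assert (Sc' : S (Rmin (m + d / 2) b)).
  { split; [split; [apply Rmin_glb; lra|assumption]|].
    exists (i :: l). intros x Hx. destruct (Rle_or_lt x c).
    - destruct (Hl x ltac:(lra)) as [j [J1 J2]]. exists j. split; [right|]; assumption.
    - exists i. split; [left; reflexivity|]. apply P. apply Rabs_def1; lra. }
  assert (Rmin (m + d / 2) b <= m) by (apply (proj1 Hm); assumption).
  replace (Rmin (m + d / 2) b) with b in Sc'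
    by (destruct (Rle_dec (m + d / 2) b); [rewrite Rmin_left in *; lra|rewrite Rmin_right; lra]).
  destruct Sc' as [_ [l' Hl']].
  exists l'. intros p [Hx Hy]. rewrite (surjective_pairing p), Hy. apply Hl'. assumption.
Qed.

(** * The polynomial [P_k] *)

Lemma prodf_nonneg n f : (forall i, (1 <= i <= n)%nat -> 0 <= f i) -> 0 <= prodf n f.
Proof.
  induction n; simpl; intros H; [lra|].
  apply Rmult_le_pos; [apply IHn; intros; apply H; lia | apply H; lia].
Qed.

Lemma prodf_pos n f : (forall i, (1 <= i <= n)%nat -> 0 < f i) -> 0 < prodf n f.
Proof.
  induction n; simpl; intros H; [lra|].
  apply Rmult_lt_0_compat; [apply IHn; intros; apply H; lia | apply H; lia].
Qed.

Lemma prodf_eq0 n f i : (1 <= i <= n)%nat -> f i = 0 -> prodf n f = 0.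
Proof.
  induction n; simpl; intros H E; [lia|].
  destruct (Nat.eq_dec i (S n)) as [->|ne]; [rewrite E; ring|].
  rewrite IHn; [ring|lia|auto].
Qed.

Lemma prodf_eq0_inv n f : prodf n f = 0 -> exists i, (1 <= i <= n)%nat /\ f i = 0.
Proof.
  induction n; simpl; intros H; [lra|].
  apply Rmult_integral in H as [H|H].
  - destruct (IHn H) as [i [? ?]]. exists i; split; [lia|auto].
  - exists (S n); split; [lia|auto].
Qed.

Lemma poly_fun_prodf_sq n (c : nat -> R) : poly_fun (fun x => prodf n (fun i => (x - c i) ^ 2)).
Proof.
  induction n; simpl; [constructor|].
  constructor; [assumption|].
  apply poly_fun_ext with (fun x => (x + (- c (S n))) * ((x + (- c (S n))) * 1));
    [repeat constructor | intros; ring].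
Qed.

Lemma poly_fun_Pk k : poly_fun (Pk k).
Proof.
  unfold Pk.
  apply poly_fun_ext with (fun x => ((-1) * (x + (INR k - 1) / 2)) * (x + - ((INR k - 1) / 2))
     * prodf (k - 1) (fun i => (x - (INR i - INR k / 2)) ^ 2)).
  - apply poly_fun_mult; [repeat constructor|].
    apply (poly_fun_prodf_sq (k - 1) (fun i => INR i - INR k / 2)).
  - intros; ring.
Qed.

Lemma ex_derive_Pk k x : ex_derive (Pk k) x.
Proof. apply (proj1 (poly_fun_Derive _ (poly_fun_Pk k))). Qed.

Lemma ex_derive_Derive_Pk k x : ex_derive (Derive (Pk k)) x.
Proof. apply (proj1 (poly_fun_Derive _ (proj2 (poly_fun_Derive _ (poly_fun_Pk k))))). Qed.

Lemma continuity_pt_Pk k x : continuity_pt (Pk k) x.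
Proof. apply continuity_pt_filterlim, (ex_derive_continuous _ _ (ex_derive_Pk k x)). Qed.

Section System.

Variable k : nat.
Hypothesis hk : (3 <= k)%nat.

Definition Qk x := prodf (k - 1) (fun i => (x - pj k i) ^ 2).

Lemma Pk_factor x : Pk k x = (r1 k ^ 2 - x ^ 2) * Qk x.
Proof. unfold Pk, Qk, r1, pj. ring. Qed.

Lemma Qk_nonneg x : 0 <= Qk x.
Proof. apply prodf_nonneg; intros; apply pow2_ge_0. Qed.

Lemma Qk_pos x : (forall i, (1 <= i <= k - 1)%nat -> x <> pj k i) -> 0 < Qk x.
Proof.
  intros H; apply prodf_pos; intros i Hi.
  apply pow2_gt_0. specialize (H i Hi). lra.
Qed.

Lemma r0_opp : r0 k = - r1 k.
Proof. unfold r0, r1; field. Qed.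

Lemma INR_k_ge3 : 3 <= INR k.
Proof. apply (le_INR 3 k) in hk. simpl in hk. lra. Qed.

Lemma r1_ge1 : 1 <= r1 k.
Proof. pose proof INR_k_ge3. unfold r1; lra. Qed.

Lemma pj_S i : pj k (S i) = pj k i + 1.
Proof. unfold pj; rewrite S_INR; ring. Qed.

Lemma pj_1 : pj k 1 = r0 k + /2.
Proof. unfold pj, r0; simpl; field. Qed.

Lemma pj_km1 : pj k (k - 1) = r1 k - /2.
Proof. unfold pj, r1; rewrite minus_INR by lia; simpl; field. Qed.

Lemma pj_succ_le i j : (i < j)%nat -> pj k i + 1 <= pj k j.
Proof.
  intros H. unfold pj.
  assert (INR (S i) <= INR j) by (apply le_INR; lia). rewrite S_INR in *. lra.
Qed.

Lemma pj_bounds i : (1 <= i <= k - 1)%nat -> r0 k + /2 <= pj k i <= r1 k - /2.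
Proof.
  intros [H1 H2]. apply le_INR in H1. apply le_INR in H2.
  rewrite minus_INR in H2 by lia. simpl in *. unfold pj, r0, r1; split; lra.
Qed.

Lemma pj_inj i j : pj k i = pj k j -> i = j.
Proof. unfold pj; intros H. apply INR_eq. lra. Qed.

Lemma not_pj_between l x : pj k l < x < pj k (S l) -> forall i, x <> pj k i.
Proof.
  intros [H1 H2] i ->. rewrite pj_S in H2.
  destruct (Nat.lt_total l i) as [c|[->|c]]; [|lra|];
    pose proof (pj_succ_le _ _ c); lra.
Qed.

Lemma pj_unique_between a b x :
  pj k a < x < pj k (S a) -> pj k b < x < pj k (S b) -> a = b.
Proof.
  rewrite !pj_S. intros Ha Hb.
  destruct (Nat.lt_total a b) as [c|[c|c]]; [|assumption|];
    pose proof (pj_succ_le _ _ c); lra.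
Qed.

Lemma Pk_nonneg x : r0 k <= x <= r1 k -> 0 <= Pk k x.
Proof.
  intros H. rewrite Pk_factor. rewrite r0_opp in H.
  apply Rmult_le_pos; [nra|apply Qk_nonneg].
Qed.

Lemma Pk_neg_outside x : x < r0 k \/ r1 k < x -> Pk k x < 0.
Proof.
  intros H. rewrite Pk_factor. rewrite r0_opp in H. pose proof r1_ge1.
  assert (0 < Qk x).
  { apply Qk_pos; intros i Hi. pose proof (pj_bounds i Hi). rewrite r0_opp in *. lra. }
  assert (r1 k ^ 2 - x ^ 2 < 0) by nra. nra.
Qed.

Lemma Pk_pos x : r0 k < x < r1 k -> (forall i, (1 <= i <= k - 1)%nat -> x <> pj k i) ->
  0 < Pk k x.
Proof.
  intros H Hi. rewrite Pk_factor. rewrite r0_opp in H.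
  apply Rmult_lt_0_compat; [nra|apply Qk_pos; auto].
Qed.

Lemma Pk_pos_between l x : r0 k < x < r1 k -> pj k l < x < pj k (S l) -> 0 < Pk k x.
Proof. intros H Hl. apply Pk_pos; [assumption|]. intros i _. apply (not_pj_between l x Hl). Qed.

Lemma Pk_pos_near_r0 t : 0 < t < /2 -> 0 < Pk k (r0 k + t).
Proof.
  intros Ht. pose proof r1_ge1. pose proof r0_opp. pose proof pj_1.
  apply (Pk_pos_between 0); [lra|]. rewrite pj_S. unfold pj, r0 in *. simpl in *. lra.
Qed.

Lemma Pk_pos_near_r1 t : 0 < t < /2 -> 0 < Pk k (r1 k - t).
Proof.
  intros Ht. pose proof r1_ge1. pose proof r0_opp. pose proof pj_km1.
  apply (Pk_pos_between (k - 1)); [lra|]. rewrite pj_S. lra.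
Qed.

Lemma Pk_pos_arc l t : (1 <= l <= k - 2)%nat -> 0 < t < 1 -> 0 < Pk k (pj k l + t).
Proof.
  intros Hl Ht. pose proof (pj_bounds l ltac:(lia)). pose proof (pj_bounds (S l) ltac:(lia)).
  apply (Pk_pos_between l); rewrite pj_S in *; lra.
Qed.

Lemma Pk_pj l : (1 <= l <= k - 1)%nat -> Pk k (pj k l) = 0.
Proof. intros H. rewrite Pk_factor. unfold Qk. rewrite (prodf_eq0 _ _ l H); ring. Qed.

Lemma Pk_r1 : Pk k (r1 k) = 0.
Proof. rewrite Pk_factor; ring. Qed.

Lemma Pk_r0 : Pk k (r0 k) = 0.
Proof. rewrite Pk_factor, r0_opp; ring. Qed.

Lemma Pk_zero_inv x : r0 k <= x <= r1 k -> Pk k x = 0 ->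
  x = r0 k \/ x = r1 k \/ exists l, (1 <= l <= k - 1)%nat /\ x = pj k l.
Proof.
  intros H E. rewrite Pk_factor in E. apply Rmult_integral in E as [E|E].
  - rewrite r0_opp in *.
    assert (E' : (r1 k - x) * (r1 k + x) = 0) by (rewrite <- E; ring).
    apply Rmult_integral in E' as [?|?]; [right; left|left]; lra.
  - apply prodf_eq0_inv in E as [i [Hi Ei]]. right; right; exists i; split; [assumption|].
    simpl in Ei. nra.
Qed.

Lemma Derive_Pk_ends x : x = r1 k \/ x = - r1 k -> Derive (Pk k) x = - 2 * x * Qk x.
Proof.
  intros Hx.
  destruct (poly_fun_Derive _ (poly_fun_prodf_sq (k - 1) (pj k))) as [HQ _].
  rewrite (Derive_ext (Pk k) (fun x => (r1 k ^ 2 - x ^ 2) * Qk x)) by apply Pk_factor.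
  rewrite Derive_mult; [|auto_derive; auto|apply HQ].
  replace (r1 k ^ 2 - x ^ 2) with 0 by (destruct Hx; subst; ring).
  replace (Derive (fun y => r1 k ^ 2 - y ^ 2) x) with (- 2 * x); [ring|].
  symmetry; apply is_derive_unique. auto_derive; auto; ring.
Qed.

Lemma Qk_ends_pos x : x = r1 k \/ x = - r1 k -> 0 < Qk x.
Proof.
  intros Hx. apply Qk_pos. intros i Hi. pose proof (pj_bounds i Hi). rewrite r0_opp in *. lra.
Qed.

Lemma Derive_Pk_r1_neg : Derive (Pk k) (r1 k) < 0.
Proof.
  rewrite Derive_Pk_ends by auto.
  pose proof (Qk_ends_pos (r1 k) (or_introl eq_refl)). pose proof r1_ge1. nra.
Qed.

Lemma Derive_Pk_r0_pos : 0 < Derive (Pk k) (r0 k).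
Proof.
  rewrite r0_opp, Derive_Pk_ends by auto.
  pose proof (Qk_ends_pos (- r1 k) (or_intror eq_refl)). pose proof r1_ge1. nra.
Qed.

Lemma Wf_Xk p : Wf (Xk k) p = Derive (Pk k) (fst p).
Proof. unfold Wf, Xk; simpl; ring. Qed.

Lemma Wf_Yk p : Wf (Yk k) p = Derive (Pk k) (fst p).
Proof. unfold Wf, Yk; simpl; ring. Qed.

Lemma W2f_Xk p : W2f (Xk k) p = Derive (Derive (Pk k)) (fst p).
Proof.
  unfold W2f, Wf, Xk; simpl. rewrite Derive_const.
  rewrite (Derive_ext (fun x => 0 * 1 + 1 * Derive (Pk k) x) (Derive (Pk k))) by (intros; ring).
  ring.
Qed.

Lemma no_sliding_escaping q : ~ (sliding (Xk k) (Yk k) q \/ escaping (Xk k) (Yk k) q).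
Proof. unfold sliding, escaping; rewrite Wf_Xk, Wf_Yk; lra. Qed.

(* On [Lambda k], [X f = P_k'] vanishes only at the double zeros [p_l] of
   [P_k] ([r0] and [r1] are simple zeros), and there [P_k >= 0] forces
   [X^2 f = P_k'' >= 0]. *)
Lemma no_singular_tangency p : Lambda k p -> ~ singular_tangency (Xk k) (Yk k) p.
Proof.
  intros [Hx Hy] [[HS [HW HW2]] _]. unfold Sigma in HS.
  assert (HP : Pk k (fst p) = 0) by (destruct Hy; lra).
  rewrite Wf_Xk in HW. rewrite W2f_Xk in HW2.
  destruct (Pk_zero_inv (fst p) Hx HP) as [E|[E|[l [Hl E]]]].
  - pose proof Derive_Pk_r0_pos. rewrite <- E in *. lra.
  - pose proof Derive_Pk_r1_neg. rewrite <- E in *. lra.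
  - enough (0 <= Derive (Derive (Pk k)) (fst p)) by lra.
    apply (second_derivative_nonneg (Pk k) (fst p) (/2) _ ltac:(lra) (ex_derive_Pk k) HP HW).
    + intros x Hx'. apply Pk_nonneg. pose proof (pj_bounds l Hl). lra.
    + apply Derive_correct, ex_derive_Derive_Pk.
Qed.

(** * Orbits of [X_k] and [Y_k] *)

Definition sg (b : bool) : R := if b then 1 else -1.

Lemma sg_sq b : sg b * sg b = 1.
Proof. destruct b; simpl; ring. Qed.

Lemma sg_inj s1 s2 : sg s1 = sg s2 -> s1 = s2.
Proof. destruct s1, s2; simpl; auto; intros; lra. Qed.

Definition Wk (s : bool) : field := if s then Xk k else Yk k.

(* Every orbit of [Wk s] inside [Lambda k] is of this form, with horizontal
   velocity [sg s] (see [side_curve_orbit]). *)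
Definition orbit (s : bool) (c t : R) : pt := (c + sg s * t, sg s * Pk k (c + sg s * t)).

Lemma Wk_eq s p : Wk s p = (sg s, Derive (Pk k) (fst p)).
Proof. destruct s; reflexivity. Qed.

Lemma orbit_shift s c t0 t : orbit s c (t0 + t) = orbit s (c + sg s * t0) t.
Proof.
  unfold orbit. replace (c + sg s * (t0 + t)) with (c + sg s * t0 + sg s * t) by ring.
  reflexivity.
Qed.

Lemma is_derive_orbit s c u : is_derive (orbit s c) u (Wk s (orbit s c u)).
Proof.
  rewrite Wk_eq. unfold orbit at 2. simpl fst.
  apply is_derive_pair.
  - auto_derive; auto. ring.
  - auto_derive; [apply ex_derive_Pk|].
    change (fun x => Pk k x) with (Pk k). destruct s; simpl; ring.
Qed.

Lemma orbit_Lambda s c t : r0 k <= c + sg s * t <= r1 k -> Lambda k (orbit s c t).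
Proof. intros H. split; [assumption|]. destruct s; simpl; [left|right]; ring. Qed.

Lemma orbit_inj s c s' c' u v :
  u < v -> orbit s c u = orbit s' c' u -> orbit s c v = orbit s' c' v -> s = s' /\ c = c'.
Proof.
  unfold orbit. intros Huv Eu Ev. injection Eu as Eu _. injection Ev as Ev _.
  assert (sg s = sg s') by nra. split; [apply sg_inj; assumption|nra].
Qed.

Lemma integral_curve_Wk s a b phi :
  int_curve (Wk s) a b phi -> a < b ->
  exists c1 c2, forall t, a <= t <= b ->
    phi t = (c1 + sg s * t, sg s * Pk k (c1 + sg s * t) + c2).
Proof.
  intros [_ [Hc Hd]] Hab.
  set (m := (a + b) / 2).
  assert (Hm : a < m < b) by (unfold m; lra).
  set (c1 := fst (phi m) - sg s * m).
  assert (F1 : forall t, a < t < b -> fst (phi t) = c1 + sg s * t).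
  { intros t Ht.
    enough (fst (phi t) - sg s * t = fst (phi m) - sg s * m) by (unfold c1; lra).
    apply (is_derive_0_const (fun u => fst (phi u) - sg s * u) a b); auto.
    intros u Hu. replace 0 with (sg s - sg s * 1) by ring.
    apply (is_derive_minus (fun u => fst (phi u)) (fun u => sg s * u)).
    - pose proof (is_derive_fst _ _ _ (Hd u Hu)) as D. rewrite Wk_eq in D. exact D.
    - auto_derive; auto. }
  set (c2 := snd (phi m) - sg s * Pk k (c1 + sg s * m)).
  assert (F2 : forall t, a < t < b -> snd (phi t) = sg s * Pk k (c1 + sg s * t) + c2).
  { intros t Ht.
    enough (snd (phi t) - sg s * Pk k (c1 + sg s * t)
            = snd (phi m) - sg s * Pk k (c1 + sg s * m)) by (unfold c2; lra).
    apply (is_derive_0_const (fun u => snd (phi u) - sg s * Pk k (c1 + sg s * u)) a b); auto.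
    intros u Hu.
    replace 0 with (Derive (Pk k) (fst (phi u)) - sg s * (sg s * Derive (Pk k) (c1 + sg s * u)))
      by (rewrite F1, <- Rmult_assoc, sg_sq by assumption; ring).
    apply (is_derive_minus (fun u => snd (phi u)) (fun u => sg s * Pk k (c1 + sg s * u))).
    - pose proof (is_derive_snd _ _ _ (Hd u Hu)) as D. rewrite Wk_eq in D. exact D.
    - apply is_derive_scal, (is_derive_comp (Pk k) (fun u => c1 + sg s * u)).
      + apply Derive_correct, ex_derive_Pk.
      + auto_derive; auto; ring. }
  exists c1, c2.
  apply (continuous_on_eq_closed phi (fun t => c1 + sg s * t)
           (fun t => sg s * Pk k (c1 + sg s * t) + c2) a b Hab Hc).
  - intros t. reg.
  - intros t. apply continuity_pt_plus; [|apply continuity_pt_const; intros ? ?; auto].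
    apply continuity_pt_scal, (continuity_pt_comp (fun u => c1 + sg s * u) (Pk k));
      [reg|apply continuity_pt_Pk].
  - intros t Ht. rewrite <- F2, <- F1 by assumption. apply surjective_pairing.
Qed.

Definition side_curve (s : bool) a b (phi : R -> pt) :=
  int_curve (Wk s) a b phi /\ forall t, a <= t <= b -> 0 <= sg s * snd (phi t).

Definition on_orbit (s : bool) (c : R) (g : R -> pt) u v :=
  forall t, u <= t <= v -> g t = orbit s c t.

(* The additive constant [c2] of [integral_curve_Wk] must vanish: otherwise
   the curve leaves [Lambda k] or the side [sg s * y >= 0]. *)
Lemma side_curve_orbit s a b phi t0 :
  side_curve s a b phi -> a <= t0 <= b -> Lambda k (phi t0) ->
  exists c, forall t, a <= t <= b -> phi t = orbit s c t /\ r0 k <= c + sg s * t <= r1 k.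
Proof.
  intros [[[Hlt|Heq] Hc'] Hs] Ht0 HL.
  - destruct (integral_curve_Wk s a b phi (conj (Rlt_le _ _ Hlt) Hc') Hlt) as [c1 [c2 Hf]].
    assert (c2 = 0).
    { pose proof (Hf t0 Ht0) as E. specialize (Hs t0 Ht0).
      destruct HL as [Hx Hy]; rewrite E in Hx, Hy, Hs; simpl in *.
      pose proof (Pk_nonneg _ Hx). destruct s, Hy; simpl in *; nra. }
    subst c2. exists c1. intros t Ht. rewrite Hf by assumption.
    split; [unfold orbit; f_equal; ring|].
    specialize (Hs t Ht). rewrite Hf in Hs by assumption. simpl in Hs.
    replace (sg s * (sg s * Pk k (c1 + sg s * t) + 0)) with (Pk k (c1 + sg s * t)) in Hs
      by (destruct s; simpl; ring).
    destruct (Rle_or_lt (r0 k) (c1 + sg s * t)); destruct (Rle_or_lt (c1 + sg s * t) (r1 k));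
      try (split; assumption);
      exfalso; assert (Pk k (c1 + sg s * t) < 0) by (apply Pk_neg_outside; auto); lra.
  - subst b. exists (fst (phi t0) - sg s * t0). intros t Ht.
    replace t with a in * by lra. replace t0 with a in * by lra.
    replace (fst (phi a) - sg s * a + sg s * a) with (fst (phi a)) by ring.
    split; [|apply HL]. specialize (Hs a Ht).
    destruct HL as [Hx Hy]. pose proof (Pk_nonneg _ Hx).
    unfold orbit; destruct (phi a) as [x y]; simpl in *.
    replace (x - sg s * a + sg s * a) with x by ring. f_equal.
    destruct s, Hy; simpl in *; nra.
Qed.

Lemma side_curve_Lambda s a b phi t0 :
  side_curve s a b phi -> a <= t0 <= b -> Lambda k (phi t0) ->
  forall t, a <= t <= b -> Lambda k (phi t).
Proof.
  intros Hc Ht0 HL t Ht.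
  destruct (side_curve_orbit s a b phi t0 Hc Ht0 HL) as [c Hf].
  destruct (Hf t Ht) as [-> ?]. apply orbit_Lambda; assumption.
Qed.

Lemma side_curve_restrict s a b a' b' phi : a <= a' -> a' <= b' -> b' <= b ->
  side_curve s a b phi -> side_curve s a' b' phi.
Proof.
  intros H1 H2 H3 [[_ [Hc Hd]] Hs]. split; [split; [assumption|split]|].
  - eapply continuous_on_subset; [|exact Hc]. simpl; intros; lra.
  - intros; apply Hd; lra.
  - intros; apply Hs; lra.
Qed.

Lemma not_followZT a b phi : ~ followZT (Xk k) (Yk k) a b phi.
Proof.
  intros [[Hab _] H]. destruct (H a ltac:(lra) 1 ltac:(lra)) as [q [Hq _]].
  exact (no_sliding_escaping q Hq).
Qed.

Lemma followX_side_curve a b phi : followX (Xk k) (Yk k) a b phi -> side_curve true a b phi.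
Proof.
  intros [H1 H2]; split; [assumption|]. intros t Ht; specialize (H2 t Ht).
  unfold SigmaPlus in H2; simpl; lra.
Qed.

Lemma followY_side_curve a b phi : followY (Xk k) (Yk k) a b phi -> side_curve false a b phi.
Proof.
  intros [H1 H2]; split; [assumption|]. intros t Ht; specialize (H2 t Ht).
  unfold SigmaMinus in H2; simpl; lra.
Qed.

Lemma followAny_side_curve a b phi :
  followAny (Xk k) (Yk k) a b phi -> exists s, side_curve s a b phi.
Proof.
  intros [H|[H|H]].
  - exists true; apply followX_side_curve; assumption.
  - exists false; apply followY_side_curve; assumption.
  - exfalso; exact (not_followZT _ _ _ H).
Qed.

Lemma local_traj_cases p a b phi : local_traj (Xk k) (Yk k) p a b phi ->
  (singular_tangency (Xk k) (Yk k) p /\ forall t, a <= t <= b -> phi t = p) \/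
  exists s1 s2, side_curve s1 a 0 phi /\ side_curve s2 0 b phi.
Proof.
  intros [Hab [_ H]].
  destruct H as [[_ H]|[[_ H]|[[_ [H1 H2]]|[[_ [H1 H2]]|
                 [[_ [H1 H2]]|[[_ [H1 H2]]|[[_ [H1 H2]]|H]]]]]]];
    [right..|left; exact H].
  - apply followX_side_curve in H. exists true, true.
    split; eapply side_curve_restrict; eauto; lra.
  - apply followY_side_curve in H. exists false, false.
    split; eapply side_curve_restrict; eauto; lra.
  - exists false, true. split; [apply followY_side_curve|apply followX_side_curve]; assumption.
  - exists true, false. split; [apply followX_side_curve|apply followY_side_curve]; assumption.
  - exfalso; exact (not_followZT _ _ _ H1).
  - exfalso; exact (not_followZT _ _ _ H2).
  - destruct (followAny_side_curve _ _ _ H1) as [s1 ?].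
    destruct (followAny_side_curve _ _ _ H2) as [s2 ?]. exists s1, s2; split; assumption.
Qed.

Lemma local_traj_Lambda p a b phi t0 : local_traj (Xk k) (Yk k) p a b phi ->
  a <= t0 <= b -> Lambda k (phi t0) -> forall t, a <= t <= b -> Lambda k (phi t).
Proof.
  intros HT Ht0 HL t Ht.
  destruct (local_traj_cases p a b phi HT) as [[_ Hc]|[s1 [s2 [C1 C2]]]].
  - rewrite Hc by assumption. rewrite <- (Hc t0); assumption.
  - assert (L0 : Lambda k (phi 0)).
    { destruct (Rle_or_lt t0 0).
      - apply (side_curve_Lambda s1 a 0 phi t0); auto; lra.
      - apply (side_curve_Lambda s2 0 b phi t0); auto; lra. }
    destruct (Rle_or_lt t 0).
    + apply (side_curve_Lambda s1 a 0 phi 0); auto; lra.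
    + apply (side_curve_Lambda s2 0 b phi 0); auto; lra.
Qed.

Lemma local_traj_orbits p a b phi t0 : local_traj (Xk k) (Yk k) p a b phi ->
  a <= t0 <= b -> Lambda k (phi t0) ->
  exists s1 c1 s2 c2, on_orbit s1 c1 phi a 0 /\ on_orbit s2 c2 phi 0 b.
Proof.
  intros HT Ht0 HL. pose proof HT as [Hab _].
  assert (L0 : Lambda k (phi 0)) by (apply (local_traj_Lambda p a b phi t0); auto; lra).
  destruct (local_traj_cases p a b phi HT) as [[Hs Hc]|[s1 [s2 [C1 C2]]]].
  - exfalso. rewrite Hc in L0 by lra. exact (no_singular_tangency p L0 Hs).
  - destruct (side_curve_orbit s1 a 0 phi 0 C1 ltac:(lra) L0) as [c1 H1].
    destruct (side_curve_orbit s2 0 b phi 0 C2 ltac:(lra) L0) as [c2 H2].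
    exists s1, c1, s2, c2. split; intros t Ht; [apply H1|apply H2]; assumption.
Qed.

Lemma Lambda_invariant : invariant (Xk k) (Yk k) (Lambda k).
Proof.
  intros g [tt [mono [up [down pieces]]]] H0.
  set (Q := fun i => forall t, tt i <= t <= tt (i + 1)%Z -> Lambda k (g t)).
  assert (Hp : forall i u, tt i <= u <= tt (i + 1)%Z -> Lambda k (g u) -> Q i).
  { intros i u Hu Lu t Ht. destruct (pieces i) as [p [s [a [b [phi [HT [Ha [Hb E]]]]]]]].
    rewrite E by assumption. rewrite E in Lu by assumption.
    apply (local_traj_Lambda p a b phi (u - s)); auto; lra. }
  destruct (partition_index tt 0 up down) as [i0 Hi0].
  assert (Hall : forall z, Q (i0 + z)%Z).
  { apply Z.peano_ind.
    - rewrite Z.add_0_r. apply (Hp i0 0); [lra|assumption].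
    - intros z Hz. apply (Hp _ (tt (i0 + z + 1)%Z)).
      + replace (i0 + Z.succ z)%Z with (i0 + z + 1)%Z by lia.
        pose proof (mono (i0 + z + 1)%Z). lra.
      + apply Hz. pose proof (mono (i0 + z)%Z). lra.
    - intros z Hz. apply (Hp _ (tt (i0 + z)%Z)).
      + replace (i0 + Z.pred z + 1)%Z with (i0 + z)%Z by lia.
        pose proof (mono (i0 + Z.pred z)%Z).
        replace (i0 + Z.pred z + 1)%Z with (i0 + z)%Z in * by lia.
        lra.
      + apply Hz. pose proof (mono (i0 + z)%Z). lra. }
  intros t. destruct (partition_index tt t up down) as [i Hi].
  replace i with (i0 + (i - i0))%Z in Hi by lia. apply (Hall (i - i0)%Z). lra.
Qed.

Definition orbit_germs (g : R -> pt) :=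
  (forall t, exists e, 0 < e /\ exists s c, on_orbit s c g t (t + e)) /\
  (forall t, exists e, 0 < e /\ exists s c, on_orbit s c g (t - e) t).

Lemma global_traj_pieces g : global_traj (Xk k) (Yk k) g -> (forall t, Lambda k (g t)) ->
  exists tt : Z -> R,
    (forall i, tt i < tt (i + 1)%Z) /\
    (forall M, exists N, forall i, (N <= i)%Z -> M < tt i) /\
    (forall M, exists N, forall i, (i <= N)%Z -> tt i < M) /\
    forall i, exists w s1 c1 s2 c2,
      (forall t, tt i <= t <= tt (i + 1)%Z -> t <= w -> g t = orbit s1 c1 t) /\
      (forall t, tt i <= t <= tt (i + 1)%Z -> w <= t -> g t = orbit s2 c2 t).
Proof.
  intros [tt [mono [up [down pieces]]]] HL.
  exists tt. split; [assumption|split; [assumption|split; [assumption|]]].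
  intros i. destruct (pieces i) as [p [w [a [b [phi [HT [Ha [Hb E]]]]]]]].
  assert (Li : Lambda k (phi (tt i - w))) by (rewrite <- E; [apply HL|pose proof (mono i); lra]).
  destruct (local_traj_orbits p a b phi (tt i - w) HT ltac:(pose proof (mono i); lra) Li)
    as [s1 [c1 [s2 [c2 [H1 H2]]]]].
  exists w, s1, (c1 + sg s1 * - w), s2, (c2 + sg s2 * - w).
  split; intros t Ht Hw; rewrite E, <- orbit_shift by assumption;
    replace (- w + t) with (t - w) by ring; [apply H1|apply H2]; lra.
Qed.

Lemma global_traj_orbit_germs g :
  global_traj (Xk k) (Yk k) g -> (forall t, Lambda k (g t)) -> orbit_germs g.
Proof.
  intros Hg HL. destruct (global_traj_pieces g Hg HL) as [tt [mono [up [down pieces]]]].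
  split; intros t.
  - destruct (partition_index tt t up down) as [i Hi].
    destruct (pieces i) as [w [s1 [c1 [s2 [c2 [H1 H2]]]]]].
    pose proof (Rmin_l w (tt (i + 1)%Z)). pose proof (Rmin_r w (tt (i + 1)%Z)).
    destruct (Rlt_or_le t w).
    + exists (Rmin w (tt (i + 1)%Z) - t). split; [apply Rlt_0_minus, Rmin_glb_lt; lra|].
      exists s1, c1. intros u Hu. apply H1; lra.
    + exists (tt (i + 1)%Z - t). split; [lra|].
      exists s2, c2. intros u Hu. apply H2; lra.
  - destruct (partition_index_left_open tt t mono up down) as [i Hi].
    destruct (pieces i) as [w [s1 [c1 [s2 [c2 [H1 H2]]]]]].
    pose proof (Rmax_l w (tt i)). pose proof (Rmax_r w (tt i)).
    destruct (Rlt_or_le w t).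
    + exists (t - Rmax w (tt i)). split; [apply Rlt_0_minus, Rmax_lub_lt; lra|].
      exists s2, c2. intros u Hu. apply H2; lra.
    + exists (t - tt i). split; [lra|].
      exists s1, c1. intros u Hu. apply H1; lra.
Qed.

Lemma on_orbit_sub s c g u v u' v' :
  u <= u' -> v' <= v -> on_orbit s c g u v -> on_orbit s c g u' v'.
Proof. intros H1 H2 H t Ht; apply H; lra. Qed.

Lemma on_orbit_glue s c g u v w : on_orbit s c g u v -> on_orbit s c g v w -> on_orbit s c g u w.
Proof. intros H1 H2 t Ht. destruct (Rle_or_lt t v); [apply H1|apply H2]; lra. Qed.

Lemma on_orbit_unique s c s' c' g u v :
  u < v -> on_orbit s c g u v -> on_orbit s' c' g u v -> s = s' /\ c = c'.
Proof.
  intros Huv H1 H2. apply (orbit_inj s c s' c' u v Huv).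
  - rewrite <- H1, <- H2 by lra. reflexivity.
  - rewrite <- H1, <- H2 by lra. reflexivity.
Qed.

Lemma on_orbit_from s c g u v w t c' :
  on_orbit s c g u v -> u <= w + t <= v -> c + sg s * w = c' -> g (w + t) = orbit s c' t.
Proof. intros H Ht <-. rewrite H by assumption. apply orbit_shift. Qed.

Section Continuation.

Variable g : R -> pt.
Hypothesis germs : orbit_germs g.

Lemma on_orbit_closed_right s c t m :
  t < m -> (forall v, t <= v < m -> on_orbit s c g t v) -> on_orbit s c g t m.
Proof.
  intros Htm Hv. destruct (proj2 germs m) as [e [He [s1 [c1 H1]]]].
  assert (Hv0 : exists v, t <= v /\ m - e <= v /\ v < m).
  { exists (Rmax t (m - e)). split; [apply Rmax_l|split; [apply Rmax_r|]].
    apply Rmax_lub_lt; lra. }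
  destruct Hv0 as [v [Htv [Hev Hvm]]].
  assert (Hw : on_orbit s c g t ((v + m) / 2)) by (apply Hv; lra).
  destruct (on_orbit_unique s c s1 c1 g v ((v + m) / 2)) as [<- <-].
  - lra.
  - apply (on_orbit_sub s c g t ((v + m) / 2)); [lra|lra|assumption].
  - apply (on_orbit_sub s1 c1 g (m - e) m); [lra|lra|assumption].
  - apply (on_orbit_glue s c g t ((v + m) / 2) m); [assumption|].
    apply (on_orbit_sub s c g (m - e) m); [lra|lra|assumption].
Qed.

(* Away from the zeros of [P_k] the orbit cannot switch to the other
   field, since [y = sg s * P_k x] determines [s]. *)
Lemma on_orbit_open_right s c t m :
  t <= m -> on_orbit s c g t m -> 0 < Pk k (c + sg s * m) ->
  exists e, 0 < e /\ on_orbit s c g t (m + e).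
Proof.
  intros Htm Hon Hpos. destruct (proj1 germs m) as [e [He [s2 [c2 H2]]]].
  pose proof (Hon m ltac:(lra)) as A1. pose proof (H2 m ltac:(lra)) as A2.
  rewrite A1 in A2. unfold orbit in A2. injection A2 as Ax Ay.
  assert (s2 = s).
  { apply sg_inj. rewrite <- Ax in Ay. destruct s, s2; simpl in *; lra. }
  subst s2. assert (c2 = c) by lra. subst c2.
  exists e. split; [assumption|]. apply (on_orbit_glue s c g t m); assumption.
Qed.

Lemma on_orbit_continue s c t L :
  0 < L -> (exists e, 0 < e /\ on_orbit s c g t (t + e)) ->
  (forall tau, 0 < tau < L -> 0 < Pk k (c + sg s * (t + tau))) ->
  on_orbit s c g t (t + L).
Proof.
  intros HL [e [He Hon]] Hpos.
  set (E := fun v => t <= v <= t + L /\ on_orbit s c g t v).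
  assert (Eb : bound E) by (exists (t + L); intros v [Hv _]; lra).
  set (w := Rmin (t + e) (t + L)).
  pose proof (Rmin_l (t + e) (t + L)). pose proof (Rmin_r (t + e) (t + L)).
  assert (Ew : E w).
  { split; [split; [apply Rmin_glb; lra|assumption]|].
    apply (on_orbit_sub s c g t (t + e)); [lra|assumption|assumption]. }
  destruct (completeness E Eb (ex_intro _ w Ew)) as [m Hm].
  assert (Hwm : w <= m) by (apply (proj1 Hm); assumption).
  assert (HmL : m <= t + L) by (apply (proj2 Hm); intros v [Hv _]; lra).
  assert (Htm : t < m) by (unfold w in *; pose proof (Rmin_glb_lt (t + e) (t + L) t); lra).
  assert (Cm : on_orbit s c g t m).
  { apply on_orbit_closed_right; [assumption|]. intros v Hv.
    destruct (is_lub_approx E m v Hm ltac:(lra)) as [v' [[_ Ev'] Hvv']].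
    apply (on_orbit_sub s c g t v'); [lra|lra|assumption]. }
  destruct (Req_dec m (t + L)) as [<-|Hne]; [assumption|].
  exfalso.
  destruct (on_orbit_open_right s c t m) as [e2 [He2 H2]]; [lra|assumption| |].
  { replace m with (t + (m - t)) by ring. apply Hpos. lra. }
  set (m' := Rmin (m + e2) (t + L)).
  pose proof (Rmin_l (m + e2) (t + L)). pose proof (Rmin_r (m + e2) (t + L)).
  assert (E m').
  { split; [split; [apply Rmin_glb; lra|assumption]|].
    apply (on_orbit_sub s c g t (m + e2)); [lra|assumption|assumption]. }
  assert (m' <= m) by (apply (proj1 Hm); assumption).
  assert (m < m') by (apply Rmin_glb_lt; lra). lra.
Qed.

End Continuation.

Section Bounce.

Variable g : R -> pt.
Hypothesis germs : orbit_germs g.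
Hypothesis in_Lambda : forall u, Lambda k (g u).

Lemma germ_at_r1 t : fst (g t) = r1 k ->
  exists e, 0 < e /\ on_orbit false (r1 k + t) g t (t + e).
Proof.
  intros Ht. destruct (proj1 germs t) as [e [He [s [c H]]]].
  rewrite (H t ltac:(lra)) in Ht. simpl in Ht.
  destruct s.
  - exfalso. destruct (in_Lambda (t + e)) as [Hx _].
    rewrite (H (t + e) ltac:(lra)) in Hx. simpl in *. lra.
  - exists e. split; [assumption|]. simpl in Ht. replace (r1 k + t) with c by lra. assumption.
Qed.

Lemma germ_at_r0 t : fst (g t) = r0 k ->
  exists e, 0 < e /\ on_orbit true (r0 k - t) g t (t + e).
Proof.
  intros Ht. destruct (proj1 germs t) as [e [He [s [c H]]]].
  rewrite (H t ltac:(lra)) in Ht. simpl in Ht.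
  destruct s.
  - exists e. split; [assumption|]. simpl in Ht. replace (r0 k - t) with c by lra. assumption.
  - exfalso. destruct (in_Lambda (t + e)) as [Hx _].
    rewrite (H (t + e) ltac:(lra)) in Hx. simpl in *. lra.
Qed.

(* [r1 - c] is the time at which the trajectory reaches [r1]. *)
Lemma bounce_r1 c t : (exists e, 0 < e /\ on_orbit true c g t (t + e)) ->
  r1 k - /2 <= c + t < r1 k ->
  on_orbit true c g t (r1 k - c) /\
  on_orbit false (2 * r1 k - c) g (r1 k - c) (r1 k - c + /2).
Proof.
  intros Hgerm Hx.
  assert (H1 : on_orbit true c g t (r1 k - c)).
  { replace (r1 k - c) with (t + (r1 k - c - t)) by ring.
    apply on_orbit_continue; [assumption|lra|assumption|].
    intros tau Htau. simpl sg.
    replace (c + 1 * (t + tau)) with (r1 k - (r1 k - c - t - tau)) by ring.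
    apply Pk_pos_near_r1. lra. }
  split; [assumption|].
  destruct (germ_at_r1 (r1 k - c)) as [e He].
  { rewrite H1 by lra. simpl. ring. }
  replace (2 * r1 k - c) with (r1 k + (r1 k - c)) by ring.
  apply on_orbit_continue; [assumption|lra|exists e; assumption|].
  intros tau Htau. simpl sg.
  replace (r1 k + (r1 k - c) + -1 * (r1 k - c + tau)) with (r1 k - tau) by ring.
  apply Pk_pos_near_r1. lra.
Qed.

Lemma bounce_r0 c t : (exists e, 0 < e /\ on_orbit false c g t (t + e)) ->
  r0 k < c - t <= r0 k + /2 ->
  on_orbit false c g t (c - r0 k) /\
  on_orbit true (2 * r0 k - c) g (c - r0 k) (c - r0 k + /2).
Proof.
  intros Hgerm Hx.
  assert (H1 : on_orbit false c g t (c - r0 k)).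
  { replace (c - r0 k) with (t + (c - r0 k - t)) by ring.
    apply on_orbit_continue; [assumption|lra|assumption|].
    intros tau Htau. simpl sg.
    replace (c + -1 * (t + tau)) with (r0 k + (c - r0 k - t - tau)) by ring.
    apply Pk_pos_near_r0. lra. }
  split; [assumption|].
  destruct (germ_at_r0 (c - r0 k)) as [e He].
  { rewrite H1 by lra. simpl. ring. }
  replace (2 * r0 k - c) with (r0 k - (c - r0 k)) by ring.
  apply on_orbit_continue; [assumption|lra|exists e; assumption|].
  intros tau Htau. simpl sg.
  replace (r0 k - (c - r0 k) + 1 * (c - r0 k + tau)) with (r0 k + tau) by ring.
  apply Pk_pos_near_r0. lra.
Qed.

End Bounce.

(* Arc [n] is the unit-time piece of trajectory whose interior lies in
   the arc [I_n] ([InArc k n]): [2 j - 1] runs right along the upper branch from [p_j] to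
   [p_(j+1)], [2 j] runs back along the lower branch, and [0] and
   [2 k - 3] are the loops around [r0] and [r1]; each arc is an orbit on
   [[0, 1/2]] and on [[1/2, 1]]. *)
Definition arc_fst n : bool * R :=
  if Nat.eqb n 0 then (false, pj k 1)
  else if Nat.eqb n (2 * k - 3) then (true, pj k (k - 1))
  else (Nat.odd n, pj k (Nat.div2 n + 1)).

Definition arc_snd n : bool * R :=
  if Nat.eqb n 0 then (true, pj k 1 - 1)
  else if Nat.eqb n (2 * k - 3) then (false, pj k (k - 1) + 1)
  else arc_fst n.

Definition arc_start n : nat :=
  if Nat.eqb n 0 then 1%nat
  else if Nat.eqb n (2 * k - 3) then (k - 1)%nat
  else (Nat.div2 n + 1)%nat.

Definition arc_end n : nat :=
  if Nat.eqb n 0 then 1%nat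
  else if Nat.eqb n (2 * k - 3) then (k - 1)%nat
  else if Nat.odd n then (Nat.div2 n + 2)%nat else Nat.div2 n.

Definition Arc n t : pt :=
  if Rle_dec t (/2) then orbit (fst (arc_fst n)) (snd (arc_fst n)) t
  else orbit (fst (arc_snd n)) (snd (arc_snd n)) t.

Inductive arc_spec (n : nat) : bool * R -> bool * R -> nat -> nat -> Prop :=
| ArcLeft : n = 0%nat -> arc_spec n (false, pj k 1) (true, pj k 1 - 1) 1 1
| ArcRight : n = (2 * k - 3)%nat ->
    arc_spec n (true, pj k (k - 1)) (false, pj k (k - 1) + 1) (k - 1) (k - 1)
| ArcUpper j : (1 <= j <= k - 2)%nat -> n = (2 * j - 1)%nat ->
    arc_spec n (true, pj k j) (true, pj k j) j (S j)
| ArcLower j : (1 <= j <= k - 2)%nat -> n = (2 * j)%nat ->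
    arc_spec n (false, pj k (S j)) (false, pj k (S j)) (S j) j.

Lemma arcP n : (n <= 2 * k - 3)%nat ->
  arc_spec n (arc_fst n) (arc_snd n) (arc_start n) (arc_end n).
Proof.
  intros hn. unfold arc_snd, arc_fst, arc_start, arc_end.
  destruct (Nat.eqb_spec n 0) as [->|n0]; [now constructor|].
  destruct (Nat.eqb_spec n (2 * k - 3)) as [->|n1]; [now constructor|].
  pose proof (Nat.div2_odd n) as Hd.
  destruct (Nat.odd n) eqn:Ho; simpl in Hd.
  - replace (Nat.div2 n + 2)%nat with (S (Nat.div2 n + 1)) by lia.
    apply ArcUpper; lia.
  - replace (Nat.div2 n + 1)%nat with (S (Nat.div2 n)) by lia.
    apply ArcLower; lia.
Qed.

Lemma Arc_lo n t : t <= /2 -> Arc n t = orbit (fst (arc_fst n)) (snd (arc_fst n)) t.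
Proof. intros; unfold Arc; destruct (Rle_dec t (/2)); [reflexivity|lra]. Qed.

Lemma Arc_hi n t : (n <= 2 * k - 3)%nat -> /2 <= t ->
  Arc n t = orbit (fst (arc_snd n)) (snd (arc_snd n)) t.
Proof.
  intros hn Ht. unfold Arc. destruct (Rle_dec t (/2)); [|reflexivity].
  replace t with (/2) by lra. pose proof pj_1. pose proof pj_km1.
  destruct (arcP n hn); [| |reflexivity|reflexivity]; unfold orbit; simpl.
  - replace (pj k 1 + -1 * / 2) with (r0 k) by lra.
    replace (pj k 1 - 1 + 1 * / 2) with (r0 k) by lra.
    rewrite Pk_r0. f_equal; ring.
  - replace (pj k (k - 1) + 1 * / 2) with (r1 k) by lra.
    replace (pj k (k - 1) + 1 + -1 * / 2) with (r1 k) by lra.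
    rewrite Pk_r1. f_equal; ring.
Qed.

Lemma Arc_upper j t : (1 <= j <= k - 2)%nat ->
  Arc (2 * j - 1) t = orbit true (pj k j) t /\
  arc_start (2 * j - 1) = j /\ arc_end (2 * j - 1) = S j.
Proof.
  intros Hj. unfold Arc.
  destruct (arcP (2 * j - 1) ltac:(lia)) as [E|E|i Hi E|i Hi E]; try lia.
  replace i with j by lia. destruct (Rle_dec t (/2)); auto.
Qed.

Lemma Arc_lower j t : (1 <= j <= k - 2)%nat ->
  Arc (2 * j) t = orbit false (pj k (S j)) t /\
  arc_start (2 * j) = S j /\ arc_end (2 * j) = j.
Proof.
  intros Hj. unfold Arc.
  destruct (arcP (2 * j) ltac:(lia)) as [E|E|i Hi E|i Hi E]; try lia.
  replace i with j by lia. destruct (Rle_dec t (/2)); auto.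
Qed.

Lemma Arc_left t :
  (t <= /2 -> Arc 0 t = orbit false (pj k 1) t) /\
  (/2 <= t -> Arc 0 t = orbit true (pj k 1 - 1) t) /\
  arc_start 0 = 1%nat /\ arc_end 0 = 1%nat.
Proof.
  split; [|split; [|auto]]; intros.
  - rewrite Arc_lo by assumption. reflexivity.
  - rewrite Arc_hi by (lia || assumption). reflexivity.
Qed.

Lemma Arc_right t :
  (t <= /2 -> Arc (2 * k - 3) t = orbit true (pj k (k - 1)) t) /\
  (/2 <= t -> Arc (2 * k - 3) t = orbit false (pj k (k - 1) + 1) t) /\
  arc_start (2 * k - 3) = (k - 1)%nat /\ arc_end (2 * k - 3) = (k - 1)%nat.
Proof.
  assert (n0 : (2 * k - 3 =? 0)%nat = false) by (apply Nat.eqb_neq; lia).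
  unfold arc_start, arc_end. rewrite n0, Nat.eqb_refl.
  split; [|split; [|auto]]; intros.
  - rewrite Arc_lo by assumption. unfold arc_fst. rewrite n0, Nat.eqb_refl. reflexivity.
  - rewrite Arc_hi by (lia || assumption). unfold arc_snd. rewrite n0, Nat.eqb_refl. reflexivity.
Qed.

Lemma arc_start_end_range n : (n <= 2 * k - 3)%nat ->
  (1 <= arc_start n <= k - 1)%nat /\ (1 <= arc_end n <= k - 1)%nat.
Proof. intros hn. destruct (arcP n hn); lia. Qed.

Lemma Arc_0 n : (n <= 2 * k - 3)%nat -> Arc n 0 = (pj k (arc_start n), 0).
Proof.
  intros hn. pose proof (proj1 (arc_start_end_range n hn)).
  rewrite Arc_lo by lra. destruct (arcP n hn); unfold orbit; simpl;
    rewrite Rmult_0_r, Rplus_0_r, Pk_pj by assumption; f_equal; ring.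
Qed.

Lemma Arc_1 n : (n <= 2 * k - 3)%nat -> Arc n 1 = (pj k (arc_end n), 0).
Proof.
  intros hn. pose proof (proj2 (arc_start_end_range n hn)).
  rewrite Arc_hi by (assumption || lra).
  destruct (arcP n hn) as [E|E|j Hj E|j Hj E]; unfold orbit; simpl fst; simpl snd; simpl sg;
    [ replace (pj k 1 - 1 + 1 * 1) with (pj k 1) by ring
    | replace (pj k (k - 1) + 1 + -1 * 1) with (pj k (k - 1)) by ring
    | replace (pj k j + 1 * 1) with (pj k (S j)) by (rewrite pj_S; ring)
    | replace (pj k (S j) + -1 * 1) with (pj k j) by (rewrite pj_S; ring) ];
    rewrite Pk_pj by assumption; f_equal; ring.
Qed.

Lemma Arc_x_range n t : (n <= 2 * k - 3)%nat -> 0 <= t <= 1 ->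
  r0 k <= fst (Arc n t) <= r1 k.
Proof.
  intros hn Ht. pose proof pj_1. pose proof pj_km1. pose proof r0_opp. pose proof r1_ge1.
  destruct (Rle_dec t (/2)); [rewrite Arc_lo by assumption|rewrite Arc_hi by (assumption || lra)];
    destruct (arcP n hn); simpl; try lra;
    pose proof (pj_bounds j ltac:(lia)); pose proof (pj_bounds (S j) ltac:(lia));
    rewrite pj_S in *; lra.
Qed.

Lemma Arc_Lambda n t : (n <= 2 * k - 3)%nat -> 0 <= t <= 1 -> Lambda k (Arc n t).
Proof.
  intros hn Ht. pose proof (Arc_x_range n t hn Ht) as Hx.
  unfold Arc in *. destruct (Rle_dec t (/2)); apply orbit_Lambda; exact Hx.
Qed.

Lemma Arc_pos n t : (n <= 2 * k - 3)%nat -> 0 < t < 1 -> t <> /2 -> 0 < Pk k (fst (Arc n t)).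
Proof.
  intros hn Ht Ht2. pose proof pj_1. pose proof pj_km1.
  destruct (Rle_dec t (/2)); [rewrite Arc_lo by assumption|rewrite Arc_hi by (assumption || lra)];
    destruct (arcP n hn); simpl.
  - replace (pj k 1 + -1 * t) with (r0 k + (/2 - t)) by lra. apply Pk_pos_near_r0; lra.
  - replace (pj k (k - 1) + 1 * t) with (r1 k - (/2 - t)) by lra. apply Pk_pos_near_r1; lra.
  - rewrite Rmult_1_l. apply Pk_pos_arc; [lia|lra].
  - replace (pj k (S j) + -1 * t) with (pj k j + (1 - t)) by (rewrite pj_S; ring).
    apply Pk_pos_arc; [lia|lra].
  - replace (pj k 1 - 1 + 1 * t) with (r0 k + (t - /2)) by lra. apply Pk_pos_near_r0; lra.
  - replace (pj k (k - 1) + 1 + -1 * t) with (r1 k - (t - /2)) by lra. apply Pk_pos_near_r1; lra.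
  - rewrite Rmult_1_l. apply Pk_pos_arc; [lia|lra].
  - replace (pj k (S j) + -1 * t) with (pj k j + (1 - t)) by (rewrite pj_S; ring).
    apply Pk_pos_arc; [lia|lra].
Qed.

Lemma Arc_in n t : (n <= 2 * k - 3)%nat -> 0 < t < 1 -> InArc k n (Arc n t).
Proof.
  intros hn Ht. pose proof pj_1. pose proof pj_km1.
  destruct (Rle_dec t (/2)); [rewrite Arc_lo by assumption|rewrite Arc_hi by (assumption || lra)];
    destruct (arcP n hn) as [E|E|j Hj E|j Hj E]; unfold InArc, orbit; simpl.
  - left. split; [assumption|]. split; [lra|right; ring].
  - right; right; right. split; [assumption|]. split; [lra|left; ring].
  - right; left. exists j. do 2 (split; [assumption|]). rewrite pj_S. split; [lra|ring].
  - right; right; left. exists j. do 2 (split; [assumption|]). rewrite pj_S. split; [lra|ring].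
  - left. split; [assumption|]. split; [lra|left; ring].
  - right; right; right. split; [assumption|]. split; [lra|right; ring].
  - right; left. exists j. do 2 (split; [assumption|]). rewrite pj_S. split; [lra|ring].
  - right; right; left. exists j. do 2 (split; [assumption|]). rewrite pj_S. split; [lra|ring].
Qed.

(* The cell [a] of a point of an arc is the unit interval
   [(p_a, p_(a+1))] containing its abscissa (with [p_0 < r0] and
   [r1 < p_k]); within a cell only the sign of [y] tells the arcs apart. *)
Lemma InArc_cell n q : InArc k n q -> exists a, pj k a < fst q < pj k (S a) /\
  ((n = 0 /\ a = 0)%nat \/ (n = 2 * k - 3 /\ a = k - 1)%nat \/
   ((1 <= a <= k - 2)%nat /\
    ((n = 2 * a - 1)%nat /\ snd q = Pk k (fst q) \/ (n = 2 * a)%nat /\ snd q = - Pk k (fst q)))).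
Proof.
  pose proof pj_1. pose proof pj_km1. pose proof r0_opp.
  intros [[E [Hx _]]|[[j [Hj [E [Hx Hy]]]]|[[j [Hj [E [Hx Hy]]]]|[E [Hx _]]]]].
  - exists 0%nat. split; [|left; lia]. rewrite pj_S. unfold pj, r0 in *. simpl in *. lra.
  - exists j. split; [assumption|]. right; right. split; [assumption|]. left; split; assumption.
  - exists j. split; [assumption|]. right; right. split; [assumption|]. right; split; assumption.
  - exists (k - 1)%nat. split; [rewrite pj_S; lra|]. right; left; lia.
Qed.

Lemma InArc_not_tang n q : InArc k n q -> ~ IsTangPt k q.
Proof.
  intros H [l [Hl ->]]. destruct (InArc_cell n _ H) as [a [Ha _]].
  exact (not_pj_between a _ Ha l eq_refl).
Qed.

Lemma InArc_unique n m q : InArc k n q -> InArc k m q -> n = m.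
Proof.
  intros Hn Hm.
  destruct (InArc_cell n q Hn) as [a [Ha Cn]]. destruct (InArc_cell m q Hm) as [b [Hb Cm]].
  pose proof (pj_unique_between a b _ Ha Hb). subst b.
  destruct Cn as [?|[?|[Hr [[? Hy]|[? Hy]]]]]; destruct Cm as [?|[?|[Hr' [[? Hy']|[? Hy']]]]];
    try lia; exfalso;
    (assert (0 < Pk k (fst q)); [|lra]);
    pose proof (pj_bounds a ltac:(lia)); pose proof (pj_bounds (S a) ltac:(lia));
    apply (Pk_pos_between a); lra.
Qed.

Definition flip (q : pt) : pt := (fst q, - snd q).

Definition time_reversal (g : R -> pt) : R -> pt := fun t => flip (g (- t)).

Lemma flip_involutive q : flip (flip q) = q.
Proof. destruct q as [x y]. unfold flip; simpl. rewrite Ropp_involutive. reflexivity. Qed.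

(* The symmetry [(x, y, t) |-> (x, - y, - t)] exchanges [X_k] and [Y_k]. *)
Lemma flip_orbit_opp s c t : flip (orbit s c (- t)) = orbit (negb s) c t.
Proof.
  unfold flip, orbit. simpl.
  replace (c + sg s * - t) with (c + sg (negb s) * t) by (destruct s; simpl; ring).
  f_equal. destruct s; simpl; ring.
Qed.

Lemma on_orbit_reversal s c g u v :
  on_orbit s c g u v -> on_orbit (negb s) c (time_reversal g) (- v) (- u).
Proof. intros H t Ht. unfold time_reversal. rewrite H by lra. apply flip_orbit_opp. Qed.

Lemma orbit_germs_reversal g : orbit_germs g -> orbit_germs (time_reversal g).
Proof.
  intros [Gf Gb]. split; intros t.
  - destruct (Gb (- t)) as [e [He [s [c H]]]]. exists e; split; [assumption|].
    exists (negb s), c. replace t with (- - t) at 1 by ring.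
    replace (t + e) with (- (- t - e)) by ring. apply on_orbit_reversal; assumption.
  - destruct (Gf (- t)) as [e [He [s [c H]]]]. exists e; split; [assumption|].
    exists (negb s), c. replace (t - e) with (- (- t + e)) by ring.
    replace t with (- - t) at 2 by ring. apply on_orbit_reversal; assumption.
Qed.

Lemma Lambda_flip q : Lambda k q -> Lambda k (flip q).
Proof. intros [Hx Hy]. split; [assumption|]. simpl. lra. Qed.

Lemma Arc_reverse n : (n <= 2 * k - 3)%nat ->
  exists n', (n' <= 2 * k - 3)%nat /\ arc_end n' = arc_start n /\
    forall t, 0 <= t <= 1 -> Arc n' t = flip (Arc n (1 - t)).
Proof.
  intros hn.
  assert (Hflip : forall s c t, flip (orbit s c (1 - t)) = orbit (negb s) (c + sg s) t).
  { intros s c t. replace (1 - t) with (- (-1 + t)) by ring.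
    rewrite flip_orbit_opp, orbit_shift. f_equal. destruct s; simpl; ring. }
  destruct (arcP n hn) as [E|E|j Hj E|j Hj E]; subst n.
  - exists 0%nat. split; [lia|]. split; [reflexivity|]. intros t Ht.
    destruct (Rle_dec t (/2)).
    + rewrite (proj1 (Arc_left t)), (proj1 (proj2 (Arc_left (1 - t)))), Hflip by lra.
      cbn [negb sg]. f_equal; ring.
    + rewrite (proj1 (proj2 (Arc_left t))), (proj1 (Arc_left (1 - t))), Hflip by lra.
      cbn [negb sg]. f_equal; ring.
  - exists (2 * k - 3)%nat. split; [lia|]. split; [apply (Arc_right 0)|]. intros t Ht.
    destruct (Rle_dec t (/2)).
    + rewrite (proj1 (Arc_right t)), (proj1 (proj2 (Arc_right (1 - t)))), Hflip by lra.
      cbn [negb sg]. f_equal; ring.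
    + rewrite (proj1 (proj2 (Arc_right t))), (proj1 (Arc_right (1 - t))), Hflip by lra.
      cbn [negb sg]. f_equal; ring.
  - exists (2 * j)%nat. split; [lia|].
    split; [apply (Arc_lower j 0 Hj)|].
    intros t Ht. rewrite (proj1 (Arc_lower j t Hj)), (proj1 (Arc_upper j (1 - t) Hj)), Hflip.
    cbn [negb sg]. rewrite pj_S. f_equal; ring.
  - exists (2 * j - 1)%nat. split; [lia|].
    split; [apply (Arc_upper j 0 Hj)|].
    intros t Ht. rewrite (proj1 (Arc_upper j t Hj)), (proj1 (Arc_lower j (1 - t) Hj)), Hflip.
    cbn [negb sg]. rewrite pj_S. f_equal; ring.
Qed.

(** * Trajectories are concatenations of arcs *)

Section Steps.

Variable g : R -> pt.
Hypothesis germs : orbit_germs g.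
Hypothesis in_Lambda : forall u, Lambda k (g u).

Lemma step_right t0 c l : (1 <= l <= k - 1)%nat ->
  (exists e, 0 < e /\ on_orbit true c g t0 (t0 + e)) -> c + t0 = pj k l ->
  exists n, (n <= 2 * k - 3)%nat /\ arc_start n = l /\
    forall t, 0 <= t <= 1 -> g (t0 + t) = Arc n t.
Proof.
  intros Hl Hgerm Hc. pose proof pj_km1.
  destruct (Nat.le_gt_cases l (k - 2)).
  - exists (2 * l - 1)%nat. split; [lia|]. split; [apply (Arc_upper l 0); lia|].
    assert (Hon : on_orbit true c g t0 (t0 + 1)).
    { apply on_orbit_continue; [assumption|lra|assumption|]. intros tau Htau. simpl sg.
      replace (c + 1 * (t0 + tau)) with (pj k l + tau) by lra. apply Pk_pos_arc; lia || lra. }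
    intros t Ht. rewrite (proj1 (Arc_upper l t ltac:(lia))).
    apply (on_orbit_from true c g t0 (t0 + 1)); [assumption|lra|simpl; lra].
  - replace l with (k - 1)%nat in * by lia.
    destruct (bounce_r1 g germs in_Lambda c t0 Hgerm ltac:(lra)) as [Hout Hback].
    exists (2 * k - 3)%nat. split; [lia|]. split; [apply (Arc_right 0)|].
    intros t Ht. destruct (Rle_dec t (/2)).
    + rewrite (proj1 (Arc_right t)) by assumption.
      apply (on_orbit_from true c g t0 (r1 k - c)); [assumption|lra|simpl; lra].
    + rewrite (proj1 (proj2 (Arc_right t))) by lra.
      apply (on_orbit_from false (2 * r1 k - c) g (r1 k - c) (r1 k - c + /2));
        [assumption|lra|simpl; lra].
Qed.

Lemma step_left t0 c l : (1 <= l <= k - 1)%nat ->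
  (exists e, 0 < e /\ on_orbit false c g t0 (t0 + e)) -> c - t0 = pj k l ->
  exists n, (n <= 2 * k - 3)%nat /\ arc_start n = l /\
    forall t, 0 <= t <= 1 -> g (t0 + t) = Arc n t.
Proof.
  intros Hl Hgerm Hc. pose proof pj_1.
  destruct (Nat.le_gt_cases 2 l).
  - destruct l as [|j]; [lia|].
    exists (2 * j)%nat. split; [lia|]. split; [apply (Arc_lower j 0); lia|].
    assert (Hon : on_orbit false c g t0 (t0 + 1)).
    { apply on_orbit_continue; [assumption|lra|assumption|]. intros tau Htau. simpl sg.
      rewrite pj_S in Hc. replace (c + -1 * (t0 + tau)) with (pj k j + (1 - tau)) by lra.
      apply Pk_pos_arc; lia || lra. }
    intros t Ht. rewrite (proj1 (Arc_lower j t ltac:(lia))).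
    apply (on_orbit_from false c g t0 (t0 + 1)); [assumption|lra|simpl; lra].
  - replace l with 1%nat in * by lia.
    destruct (bounce_r0 g germs in_Lambda c t0 Hgerm ltac:(lra)) as [Hout Hback].
    exists 0%nat. split; [lia|]. split; [apply (Arc_left 0)|].
    intros t Ht. destruct (Rle_dec t (/2)).
    + rewrite (proj1 (Arc_left t)) by assumption.
      apply (on_orbit_from false c g t0 (c - r0 k)); [assumption|lra|simpl; lra].
    + rewrite (proj1 (proj2 (Arc_left t))) by lra.
      apply (on_orbit_from true (2 * r0 k - c) g (c - r0 k) (c - r0 k + /2));
        [assumption|lra|simpl; lra].
Qed.

Lemma step_fw t0 l : (1 <= l <= k - 1)%nat -> g t0 = (pj k l, 0) ->
  exists n, (n <= 2 * k - 3)%nat /\ arc_start n = l /\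
    forall t, 0 <= t <= 1 -> g (t0 + t) = Arc n t.
Proof.
  intros Hl Ht0. destruct (proj1 germs t0) as [e [He [s [c Hon]]]].
  assert (Hc : c + sg s * t0 = pj k l).
  { rewrite (Hon t0) in Ht0 by lra. injection Ht0 as Hx _. exact Hx. }
  assert (Hgerm : exists e, 0 < e /\ on_orbit s c g t0 (t0 + e)) by (exists e; auto).
  destruct s; simpl sg in Hc; [apply step_right with c|apply step_left with c];
    auto; lra.
Qed.

End Steps.

Lemma step_bw g t0 l : orbit_germs g -> (forall u, Lambda k (g u)) ->
  (1 <= l <= k - 1)%nat -> g t0 = (pj k l, 0) ->
  exists n, (n <= 2 * k - 3)%nat /\ arc_end n = l /\
    forall t, 0 <= t <= 1 -> g (t0 - 1 + t) = Arc n t.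
Proof.
  intros germs in_Lambda Hl Ht0.
  assert (Hr : time_reversal g (- t0) = (pj k l, 0)).
  { unfold time_reversal, flip. rewrite Ropp_involutive, Ht0. simpl. f_equal; ring. }
  destruct (step_fw (time_reversal g) (orbit_germs_reversal g germs)
              (fun u => Lambda_flip _ (in_Lambda (- u))) (- t0) l Hl Hr) as [n [hn [Hs Hf]]].
  destruct (Arc_reverse n hn) as [n' [hn' [He Hrev]]].
  exists n'. split; [assumption|]. split; [congruence|].
  intros t Ht. rewrite Hrev, <- Hf by lra. unfold time_reversal.
  rewrite flip_involutive. f_equal. ring.
Qed.

Lemma pj_floor x : r0 k <= x <= r1 k ->
  exists a, (a <= k - 1)%nat /\ pj k a <= x < pj k (S a).
Proof.
  intros Hx. pose proof INR_k_ge3.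
  destruct (nfloor_ex (x + INR k / 2)) as [a Ha]; [unfold r0 in Hx; lra|].
  exists a. rewrite pj_S. unfold pj. split; [|lra].
  assert (INR a < INR k) by (unfold r1 in Hx; lra). apply INR_lt in H0. lia.
Qed.

Lemma Lambda_IsTangPt q l : Lambda k q -> (1 <= l <= k - 1)%nat -> fst q = pj k l ->
  IsTangPt k q.
Proof.
  intros [_ Hy] Hl Hx. exists l. split; [assumption|].
  rewrite (surjective_pairing q), Hx. rewrite Hx, Pk_pj in Hy by assumption.
  f_equal. lra.
Qed.

Section Phase.

Variable g : R -> pt.
Hypothesis germs : orbit_germs g.
Hypothesis in_Lambda : forall u, Lambda k (g u).

Lemma tangency_ahead_right c :
  (exists e, 0 < e /\ on_orbit true c g 0 (0 + e)) ->
  (forall l, (1 <= l <= k - 1)%nat -> c <> pj k l) ->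
  exists tau, 0 < tau < 1 /\ IsTangPt k (g tau).
Proof.
  intros [e [He Hon]] Nt. pose proof pj_km1. pose proof r0_opp. pose proof r1_ge1.
  assert (Hc : fst (g 0) = c) by (rewrite Hon by lra; simpl; ring).
  assert (Hr1 : c < r1 k).
  { destruct (in_Lambda e) as [Hx _]. rewrite Hon in Hx by lra. simpl in Hx. lra. }
  assert (Hr0 : r0 k <= c) by (rewrite <- Hc; apply in_Lambda).
  destruct (Rlt_or_le (pj k (k - 1)) c).
  - destruct (bounce_r1 g germs in_Lambda c 0 (ex_intro _ e (conj He Hon)) ltac:(lra))
      as [_ Hback].
    exists (r1 k - c + /2). split; [lra|].
    apply (Lambda_IsTangPt _ (k - 1)); [apply in_Lambda|lia|].
    rewrite Hback by lra. simpl. lra.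
  - destruct (pj_floor c ltac:(lra)) as [a [Ha Hca]].
    assert (Hlt : pj k a < c).
    { destruct (proj1 Hca) as [|E]; [assumption|]. destruct a.
      - unfold pj, r0 in *. simpl in *. lra.
      - exfalso. apply (Nt (S a)); [|auto]. split; [lia|].
        destruct (Nat.le_gt_cases (S a) (k - 1)); [assumption|].
        pose proof (pj_succ_le (k - 1) (S a) ltac:(lia)). lra. }
    assert (HSa : (S a <= k - 1)%nat).
    { destruct (Nat.le_gt_cases (S a) (k - 1)); [assumption|].
      pose proof (pj_succ_le (k - 1) (S a) ltac:(lia)). rewrite pj_S in *. lra. }
    pose proof (pj_bounds (S a) ltac:(lia)).
    assert (Hrun : on_orbit true c g 0 (0 + (pj k (S a) - c))).
    { apply on_orbit_continue; [assumption|lra|exists e; auto|].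
      intros tau Htau. apply (Pk_pos_between a); simpl; lra. }
    exists (pj k (S a) - c). split; [rewrite pj_S in *; lra|].
    apply (Lambda_IsTangPt _ (S a)); [apply in_Lambda|lia|].
    rewrite Hrun by lra. simpl. ring.
Qed.

Lemma tangency_ahead_left c :
  (exists e, 0 < e /\ on_orbit false c g 0 (0 + e)) ->
  (forall l, (1 <= l <= k - 1)%nat -> c <> pj k l) ->
  exists tau, 0 < tau < 1 /\ IsTangPt k (g tau).
Proof.
  intros [e [He Hon]] Nt. pose proof pj_1. pose proof r0_opp. pose proof r1_ge1.
  assert (Hc : fst (g 0) = c) by (rewrite Hon by lra; simpl; ring).
  assert (Hr0 : r0 k < c).
  { destruct (in_Lambda e) as [Hx _]. rewrite Hon in Hx by lra. simpl in Hx. lra. }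
  assert (Hr1 : c <= r1 k) by (rewrite <- Hc; apply in_Lambda).
  destruct (Rlt_or_le c (pj k 1)).
  - destruct (bounce_r0 g germs in_Lambda c 0 (ex_intro _ e (conj He Hon)) ltac:(lra))
      as [_ Hback].
    exists (c - r0 k + /2). split; [lra|].
    apply (Lambda_IsTangPt _ 1); [apply in_Lambda|lia|].
    rewrite Hback by lra. simpl. lra.
  - destruct (pj_floor c ltac:(lra)) as [a [Ha Hca]].
    assert (Ha1 : (1 <= a)%nat).
    { destruct a; [|lia]. rewrite pj_S in Hca. unfold pj, r0 in *. simpl in *. lra. }
    assert (Hlt : pj k a < c).
    { destruct (proj1 Hca) as [|E]; [assumption|]. exfalso. apply (Nt a); [lia|auto]. }
    pose proof (pj_bounds a ltac:(lia)).
    assert (Hrun : on_orbit false c g 0 (0 + (c - pj k a))).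
    { apply on_orbit_continue; [assumption|lra|exists e; auto|].
      intros tau Htau. apply (Pk_pos_between a); simpl; lra. }
    exists (c - pj k a). split; [rewrite pj_S in *; lra|].
    apply (Lambda_IsTangPt _ a); [apply in_Lambda|lia|].
    rewrite Hrun by lra. simpl. ring.
Qed.

Lemma tangency_ahead : exists tau, 0 <= tau < 1 /\ IsTangPt k (g tau).
Proof.
  destruct (classic (exists l, (1 <= l <= k - 1)%nat /\ fst (g 0) = pj k l))
    as [[l [Hl E]]|Nt].
  { exists 0. split; [lra|]. apply (Lambda_IsTangPt _ l); auto. }
  destruct (proj1 germs 0) as [e [He [s [c Hon]]]].
  assert (Hc : fst (g 0) = c) by (rewrite Hon by lra; simpl; ring).
  assert (Nt' : forall l, (1 <= l <= k - 1)%nat -> c <> pj k l).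
  { intros l Hl E. rewrite <- Hc in E. eauto. }
  assert (Hgerm : exists e, 0 < e /\ on_orbit s c g 0 (0 + e)) by eauto.
  destruct s.
  - destruct (tangency_ahead_right c Hgerm Nt') as [tau Htau]. exists tau. split; [lra|tauto].
  - destruct (tangency_ahead_left c Hgerm Nt') as [tau Htau]. exists tau. split; [lra|tauto].
Qed.

Lemma IsTangPt_succ t : IsTangPt k (g t) -> IsTangPt k (g (t + 1)).
Proof.
  intros [l [Hl E]]. destruct (step_fw g germs in_Lambda t l Hl E) as [n [hn [_ Hf]]].
  exists (arc_end n). split; [apply (arc_start_end_range n hn)|].
  rewrite Hf by lra. apply Arc_1; assumption.
Qed.

Lemma IsTangPt_pred t : IsTangPt k (g t) -> IsTangPt k (g (t - 1)).
Proof.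
  intros [l [Hl E]]. destruct (step_bw g t l germs in_Lambda Hl E) as [n [hn [_ Hf]]].
  exists (arc_start n). split; [apply (arc_start_end_range n hn)|].
  replace (t - 1) with (t - 1 + 0) by ring. rewrite Hf by lra. apply Arc_0; assumption.
Qed.

Lemma IsTangPt_shift t0 : IsTangPt k (g t0) -> forall m, IsTangPt k (g (t0 + IZR m)).
Proof.
  intros T0. apply Z.peano_ind.
  - rewrite Rplus_0_r. assumption.
  - intros m Hm. rewrite succ_IZR, <- Rplus_assoc. apply IsTangPt_succ; assumption.
  - intros m Hm. rewrite <- Z.sub_1_r, minus_IZR.
    replace (t0 + (IZR m - 1)) with (t0 + IZR m - 1) by ring.
    apply IsTangPt_pred; assumption.
Qed.

End Phase.

Definition admissible (a : Z -> nat) :=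
  (forall m, (a m <= 2 * k - 3)%nat) /\ (forall m, arc_end (a m) = arc_start (a (m + 1)%Z)).

Lemma arc_decomposition g : orbit_germs g -> (forall u, Lambda k (g u)) ->
  exists th, 0 <= th < 1 /\ exists a, admissible a /\
    forall m t, 0 <= t <= 1 -> g (- th + IZR m + t) = Arc (a m) t.
Proof.
  intros germs in_Lambda.
  assert (T0 : exists th, 0 <= th < 1 /\ IsTangPt k (g (- th))).
  { destruct (tangency_ahead g germs in_Lambda) as [tau [Htau T]].
    destruct (Req_dec tau 0) as [->|ne].
    - exists 0. rewrite Ropp_0. split; [lra|assumption].
    - exists (1 - tau). split; [lra|].
      replace (- (1 - tau)) with (tau + IZR (-1)) by (simpl; ring).
      apply IsTangPt_shift; assumption. }
  destruct T0 as [th [Hth T0]]. exists th. split; [assumption|].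
  set (P := fun m n => (n <= 2 * k - 3)%nat /\
              forall t, 0 <= t <= 1 -> g (- th + IZR m + t) = Arc n t).
  assert (Sp : forall m, P m (epsilon (inhabits 0%nat) (P m))).
  { intros m. apply epsilon_spec.
    destruct (IsTangPt_shift g germs in_Lambda _ T0 m) as [l [Hl E]].
    destruct (step_fw g germs in_Lambda _ l Hl E) as [n [Hn [_ Hf]]].
    exists n. split; assumption. }
  exists (fun m => epsilon (inhabits 0%nat) (P m)).
  split; [split|].
  - intros m; apply (Sp m).
  - intros m. destruct (Sp m) as [Hn1 F1]. destruct (Sp (m + 1)%Z) as [Hn2 F2].
    pose proof (F1 1 ltac:(lra)) as A1. pose proof (F2 0 ltac:(lra)) as A2.
    rewrite plus_IZR in A2. replace (- th + (IZR m + 1) + 0) with (- th + IZR m + 1) in A2 by ring.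
    rewrite A1, Arc_1, Arc_0 in A2 by assumption. injection A2 as A2. apply pj_inj; assumption.
  - intros m t Ht. apply (Sp m); assumption.
Qed.

Lemma itin_arc_decomposition g th a : 0 <= th < 1 -> (forall m, (a m <= 2 * k - 3)%nat) ->
  (forall m t, 0 <= t <= 1 -> g (- th + IZR m + t) = Arc (a m) t) ->
  itin k g = a.
Proof.
  intros Hth Ha Hg. apply functional_extensionality. intros j.
  assert (Gj : forall t, 0 <= t <= 1 -> g (IZR j + t - th) = Arc (a j) t).
  { intros t Ht. rewrite <- Hg by assumption. f_equal. ring. }
  assert (Tang0 : th = 0 -> IsTangPt k (g (IZR j))).
  { intros ->. replace (IZR j) with (IZR j + 0 - 0) by ring.
    rewrite Gj, Arc_0 by (apply Ha || lra).
    exists (arc_start (a j)). split; [apply (arc_start_end_range _ (Ha j))|reflexivity]. }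
  assert (Mid0 : th = 0 -> InArc k (a j) (g (IZR j + /2))).
  { intros ->. replace (IZR j + /2) with (IZR j + /2 - 0) by ring.
    rewrite Gj by lra. apply Arc_in; [apply Ha|lra]. }
  assert (In1 : th <> 0 -> InArc k (a j) (g (IZR j))).
  { intros ne. replace (IZR j) with (IZR j + th - th) by ring.
    rewrite Gj by lra. apply Arc_in; [apply Ha|lra]. }
  assert (Uq : forall n, itin_at k g j n -> n = a j).
  { intros n [H|[T H]]; destruct (Req_dec th 0) as [E|E].
    - exfalso; exact (InArc_not_tang _ _ H (Tang0 E)).
    - exact (InArc_unique _ _ _ H (In1 E)).
    - exact (InArc_unique _ _ _ H (Mid0 E)).
    - exfalso; exact (InArc_not_tang _ _ (In1 E) T). }
  apply Uq. unfold itin. apply epsilon_spec. exists (a j).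
  destruct (Req_dec th 0) as [E|E]; [right; split|left]; auto.
Qed.

(** * Realising admissible sequences *)

(* Centred at its midpoint, which lies off [Sigma], the orbit piece is a
   local trajectory of [X_k] or of [Y_k]. *)
Lemma orbit_piece_local_traj s C gamma t1 t2 : t1 < t2 -> on_orbit s C gamma t1 t2 ->
  (forall t, t1 <= t <= t2 -> Lambda k (gamma t)) ->
  0 < Pk k (fst (gamma ((t1 + t2) / 2))) ->
  exists p s0 a b phi, local_traj (Xk k) (Yk k) p a b phi /\ a <= t1 - s0 /\ t2 - s0 <= b /\
    forall t, t1 <= t <= t2 -> gamma t = phi (t - s0).
Proof.
  intros H12 Hon HL Hmid.
  set (s0 := (t1 + t2) / 2).
  set (phi := fun u => orbit s (C + sg s * s0) u).
  assert (Ephi : forall t, t1 <= t <= t2 -> gamma t = phi (t - s0)).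
  { intros t Ht. unfold phi. rewrite <- orbit_shift, Hon by assumption. f_equal. ring. }
  assert (Hside : forall u, t1 - s0 <= u <= t2 - s0 -> 0 <= sg s * snd (phi u)).
  { intros u Hu. unfold phi, orbit; simpl. rewrite <- Rmult_assoc, sg_sq, Rmult_1_l.
    apply Pk_nonneg. pose proof (HL (u + s0) ltac:(lra)) as [Hx _].
    rewrite Hon in Hx by lra. simpl in Hx.
    replace (C + sg s * s0 + sg s * u) with (C + sg s * (u + s0)) by ring. exact Hx. }
  assert (IC : int_curve (Wk s) (t1 - s0) (t2 - s0) phi).
  { split; [unfold s0; lra|]. split.
    - apply continuous_on_forall. intros u _.
      apply (@ex_derive_continuous R_AbsRing R2).
      eexists. apply is_derive_orbit.
    - intros u _. apply is_derive_orbit. }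
  assert (P0 : sg s * snd (phi 0) = Pk k (fst (gamma s0))).
  { rewrite Ephi by (unfold s0; lra). replace (s0 - s0) with 0 by ring.
    unfold phi, orbit; simpl. rewrite <- Rmult_assoc, sg_sq. ring. }
  exists (phi 0), s0, (t1 - s0), (t2 - s0), phi.
  split; [|split; [lra|split; [lra|exact Ephi]]].
  split; [unfold s0; lra|]. split; [reflexivity|].
  unfold s0 in P0. destruct s; simpl sg in P0, Hside.
  - left. split; [lra|]. split; [exact IC|]. intros u Hu. specialize (Hside u Hu).
    unfold SigmaPlus. lra.
  - right; left. split; [lra|]. split; [exact IC|]. intros u Hu. specialize (Hside u Hu).
    unfold SigmaMinus. lra.
Qed.

Definition build (a : Z -> nat) : R -> pt :=
  fun t => Arc (a (Zfloor t)) (t - IZR (Zfloor t)).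

Section Build.

Variable a : Z -> nat.
Hypothesis adm : admissible a.

Lemma build_Arc m t : 0 <= t <= 1 -> build a (IZR m + t) = Arc (a m) t.
Proof.
  intros Ht. destruct adm as [Ha Hc]. unfold build.
  destruct (Req_dec t 1) as [->|ne].
  - rewrite <- plus_IZR, ZfloorZ. replace (IZR (m + 1) - IZR (m + 1)) with 0 by ring.
    rewrite Arc_0, Arc_1, Hc by apply Ha. reflexivity.
  - rewrite (Zfloor_eq m) by lra. f_equal. ring.
Qed.

Lemma build_Lambda t : Lambda k (build a t).
Proof.
  replace t with (IZR (Zfloor t) + (t - IZR (Zfloor t))) by ring.
  pose proof (Zfloor_bound t).
  rewrite build_Arc by lra. apply Arc_Lambda; [apply adm|lra].
Qed.

Lemma build_half_orbits i : exists s C,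
  on_orbit s C (build a) (IZR i / 2) (IZR (i + 1) / 2) /\
  0 < Pk k (fst (build a ((IZR i / 2 + IZR (i + 1) / 2) / 2))).
Proof.
  destruct adm as [Ha _]. rewrite plus_IZR.
  destruct (Zeven_odd_dec i) as [Ev|Od]; [destruct (Zeven_ex i Ev) as [m ->]|
                                          destruct (Zodd_ex i Od) as [m ->]];
    rewrite ?plus_IZR, mult_IZR.
  - exists (fst (arc_fst (a m))), (snd (arc_fst (a m)) + sg (fst (arc_fst (a m))) * - IZR m).
    split.
    + intros t Ht. replace t with (IZR m + (t - IZR m)) at 1 by ring.
      rewrite build_Arc, Arc_lo, <- orbit_shift by lra. f_equal. ring.
    + replace ((2 * IZR m / 2 + (2 * IZR m + 1) / 2) / 2) with (IZR m + /4) by field.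
      rewrite build_Arc by lra. apply Arc_pos; [apply Ha|lra|lra].
  - exists (fst (arc_snd (a m))), (snd (arc_snd (a m)) + sg (fst (arc_snd (a m))) * - IZR m).
    split.
    + intros t Ht. replace t with (IZR m + (t - IZR m)) at 1 by ring.
      rewrite build_Arc, Arc_hi, <- orbit_shift by (apply Ha || lra). f_equal. ring.
    + replace (((2 * IZR m + 1) / 2 + (2 * IZR m + 1 + 1) / 2) / 2) with (IZR m + 3 / 4) by field.
      rewrite build_Arc by lra. apply Arc_pos; [apply Ha|lra|lra].
Qed.

Lemma build_global_traj : global_traj (Xk k) (Yk k) (build a).
Proof.
  exists (fun i => IZR i / 2). split; [|split; [|split]].
  - intros i. rewrite plus_IZR. lra.
  - intros M. exists (Zfloor (2 * M) + 1)%Z. intros i Hi. apply IZR_le in Hi.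
    rewrite plus_IZR in Hi. pose proof (Zfloor_bound (2 * M)). lra.
  - intros M. exists (Zfloor (2 * M) - 1)%Z. intros i Hi. apply IZR_le in Hi.
    rewrite minus_IZR in Hi. pose proof (Zfloor_bound (2 * M)). lra.
  - intros i. destruct (build_half_orbits i) as [s [C [Hon Hpos]]].
    apply (orbit_piece_local_traj s C); [rewrite plus_IZR; lra|assumption| |assumption].
    intros; apply build_Lambda.
Qed.

Lemma build_Omega : Omega k (build a).
Proof. split; [apply build_global_traj|apply build_Lambda]. Qed.

Lemma itin_build : itin k (build a) = a.
Proof.
  apply (itin_arc_decomposition (build a) 0 a); [lra|apply adm|].
  intros m t Ht. rewrite <- build_Arc by assumption. f_equal. ring.
Qed.

End Build.

Lemma Omega_Lambda g : Omega k g -> forall u, Lambda k (g u).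
Proof. intros [Hg H0] u. exact (Lambda_invariant g Hg H0 u). Qed.

Lemma Omega_arc_decomposition g : Omega k g ->
  exists th, 0 <= th < 1 /\ admissible (itin k g) /\
    forall m t, 0 <= t <= 1 -> g (- th + IZR m + t) = Arc (itin k g m) t.
Proof.
  intros HO. pose proof (Omega_Lambda g HO) as HL.
  destruct (arc_decomposition g (global_traj_orbit_germs g (proj1 HO) HL) HL)
    as [th [Hth [a [Ha Hf]]]].
  rewrite (itin_arc_decomposition g th a Hth (proj1 Ha) Hf).
  exists th. split; [assumption|]. split; assumption.
Qed.

Lemma itin_admissible g : Omega k g -> admissible (itin k g).
Proof. intros HO. destruct (Omega_arc_decomposition g HO) as [_ [_ [Ha _]]]. exact Ha. Qed.

Lemma global_traj_shift X Y g c :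
  global_traj X Y g -> global_traj X Y (fun t => g (t + c)).
Proof.
  intros [tt [mono [up [down pieces]]]].
  exists (fun i => tt i - c). split; [|split; [|split]].
  - intros i; specialize (mono i); lra.
  - intros M. destruct (up (M + c)) as [N HN]. exists N; intros i Hi; specialize (HN i Hi); lra.
  - intros M. destruct (down (M + c)) as [N HN]. exists N; intros i Hi; specialize (HN i Hi); lra.
  - intros i. destruct (pieces i) as [p [s [a [b [phi [HT [Ha [Hb E]]]]]]]].
    exists p, (s - c), a, b, phi. split; [assumption|]. split; [lra|split; [lra|]].
    intros t Ht. rewrite E by lra. f_equal; ring.
Qed.

Lemma Omega_shift g c : Omega k g -> Omega k (fun t => g (t + c)).
Proof.
  intros HO. split; [apply global_traj_shift, HO|]. apply (Omega_Lambda g HO).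
Qed.

Lemma itin_T1 g : itin k (T1 g) = sigma_shift (itin k g).
Proof.
  apply functional_extensionality. intros j.
  unfold sigma_shift, itin, itin_at, T1. rewrite plus_IZR.
  replace (IZR j + / 2 + 1) with (IZR j + 1 + / 2) by ring. reflexivity.
Qed.

(* Shift by the phase of [Omega_arc_decomposition]. *)
Lemma rep_exists g : Omega k g ->
  exists g', Omega k g' /\ equiv_traj k g' g /\ IsTangPt k (g' 0).
Proof.
  intros HO. destruct (Omega_arc_decomposition g HO) as [th [Hth [[Hn Hc] Hf]]].
  set (g' := fun t => g (t + - th)).
  assert (E' : forall m t, 0 <= t <= 1 -> g' (- 0 + IZR m + t) = Arc (itin k g m) t).
  { intros m t Ht. unfold g'. rewrite <- Hf by assumption. f_equal. ring. }
  assert (E0 : g' 0 = Arc (itin k g 0) 0).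
  { rewrite <- E' by lra. f_equal. simpl. ring. }
  exists g'. split; [|split].
  - apply Omega_shift, HO.
  - apply (itin_arc_decomposition g' 0 (itin k g)); [lra|assumption|assumption].
  - rewrite E0, Arc_0 by apply Hn. exists (arc_start (itin k g 0)).
    split; [apply (arc_start_end_range _ (Hn 0%Z))|reflexivity].
Qed.

Lemma rep_Arc g : Omega k g ->
  forall m t, 0 <= t <= 1 -> rep k g (IZR m + t) = Arc (itin k g m) t.
Proof.
  intros HO.
  assert (Sp : Omega k (rep k g) /\ equiv_traj k (rep k g) g /\ IsTangPt k (rep k g 0)).
  { unfold rep. apply epsilon_spec. apply rep_exists; assumption. }
  destruct Sp as [HO' [Heq HT]].
  destruct (Omega_arc_decomposition (rep k g) HO') as [th [Hth [[Hn _] Hf]]].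
  unfold equiv_traj in Heq. rewrite Heq in Hf, Hn.
  assert (th = 0).
  { destruct (Req_dec th 0) as [|ne]; [assumption|]. exfalso.
    pose proof (Hf 0%Z th ltac:(lra)) as E.
    replace (- th + IZR 0 + th) with 0 in E by (simpl; ring).
    rewrite E in HT. apply (InArc_not_tang (itin k g 0) _ (Arc_in _ th (Hn 0%Z) ltac:(lra)) HT). }
  subst th. intros m t Ht. rewrite <- Hf by assumption. f_equal. ring.
Qed.

Lemma Lambda_compact : compact2 (Lambda k).
Proof.
  pose proof r0_opp. pose proof r1_ge1.
  apply (compact2_union _ (fun q => r0 k <= fst q <= r1 k /\ snd q = Pk k (fst q))
                          (fun q => r0 k <= fst q <= r1 k /\ snd q = - Pk k (fst q))).
  - intros q. unfold Lambda. tauto.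
  - apply compact2_graph; [lra|apply continuity_pt_Pk].
  - apply (compact2_graph (fun x => - Pk k x)); [lra|].
    intros x. apply continuity_pt_opp, continuity_pt_Pk.
Qed.

Definition ArcSet n : pt -> Prop := fun q => exists t, 0 <= t <= 1 /\ q = Arc n t.

Definition arc_dist n n' := hausdorff (ArcSet n) (ArcSet n').

Lemma ArcSet_Arc n t : 0 <= t <= 1 -> ArcSet n (Arc n t).
Proof. exists t; split; [assumption|reflexivity]. Qed.

Lemma arc_dist_self n : arc_dist n n = 0.
Proof. apply (hausdorff_self _ _ (ArcSet_Arc n 0 ltac:(lra))). Qed.

Lemma ArcSet_bounded : exists D, 0 <= D /\ forall n n' q q',
  (n <= 2 * k - 3)%nat -> (n' <= 2 * k - 3)%nat -> ArcSet n q -> ArcSet n' q' -> edist q q' <= D.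
Proof.
  pose proof r0_opp. pose proof r1_ge1.
  destruct (continuity_ab_maj (Pk k) (r0 k) (r1 k)) as [xM [HM HxM]];
    [lra|intros; apply continuity_pt_Pk|].
  assert (Hpt : forall n t, (n <= 2 * k - 3)%nat -> 0 <= t <= 1 ->
            Rabs (fst (Arc n t)) <= r1 k /\ Rabs (snd (Arc n t)) <= Pk k xM).
  { intros n t hn Ht. pose proof (Arc_Lambda n t hn Ht) as [Hx Hy].
    pose proof (Pk_nonneg _ Hx). pose proof (HM _ Hx).
    split; [apply Rabs_le; lra|].
    destruct Hy as [-> | ->]; [|rewrite Rabs_Ropp]; rewrite Rabs_right; lra. }
  exists (2 * r1 k + 2 * Pk k xM). split; [pose proof (Pk_nonneg xM HxM); lra|].
  intros n n' q q' hn hn' [t [Ht ->]] [t' [Ht' ->]].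
  destruct (Hpt n t hn Ht). destruct (Hpt n' t' hn' Ht').
  eapply Rle_trans; [apply edist_le_abs|].
  pose proof (Rabs_triang (fst (Arc n t)) (- fst (Arc n' t'))).
  pose proof (Rabs_triang (snd (Arc n t)) (- snd (Arc n' t'))).
  rewrite Rabs_Ropp in *. unfold Rminus. lra.
Qed.

Lemma orbit_dist_min m s c a b : a <= b ->
  (forall t, a <= t <= b -> m <> orbit s c t) ->
  exists d, 0 < d /\ forall t, a <= t <= b -> d <= edist m (orbit s c t).
Proof.
  intros Hab Hne.
  destruct (continuity_ab_min (fun t => edist m (orbit s c t)) a b Hab) as [tm [H1 H2]].
  - intros t _. unfold edist, orbit; simpl.
    set (F := fun t => (fst m - (c + sg s * t)) ^ 2 + (snd m - sg s * Pk k (c + sg s * t)) ^ 2).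
    apply (continuity_pt_comp F sqrt).
    + apply continuity_pt_filterlim, (ex_derive_continuous F). unfold F.
      auto_derive. apply ex_derive_Pk.
    + apply continuity_pt_sqrt. unfold F. apply Rplus_le_le_0_compat; apply pow2_ge_0.
  - exists (edist m (orbit s c tm)). split; [apply edist_pos, Hne; assumption|assumption].
Qed.

(* The midpoint of an arc lies on no other arc, and arcs are compact. *)
Lemma Arc_mid_far n n' : (n <= 2 * k - 3)%nat -> (n' <= 2 * k - 3)%nat -> n <> n' ->
  exists d, 0 < d /\ forall t, 0 <= t <= 1 -> d <= edist (Arc n (/2)) (Arc n' t).
Proof.
  intros hn hn' Hnn.
  assert (Hm : InArc k n (Arc n (/2))) by (apply Arc_in; [assumption|lra]).
  assert (Ne : forall t, 0 <= t <= 1 -> Arc n (/2) <> Arc n' t).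
  { intros t Ht E.
    destruct (Req_dec t 0) as [->|n0]; [|destruct (Req_dec t 1) as [->|n1]].
    - rewrite Arc_0 in E by assumption. apply (InArc_not_tang n _ Hm).
      rewrite E. exists (arc_start n'). split; [apply (arc_start_end_range n' hn')|reflexivity].
    - rewrite Arc_1 in E by assumption. apply (InArc_not_tang n _ Hm).
      rewrite E. exists (arc_end n'). split; [apply (arc_start_end_range n' hn')|reflexivity].
    - apply Hnn, (InArc_unique n n' _ Hm). rewrite E. apply Arc_in; [assumption|lra]. }
  destruct (orbit_dist_min (Arc n (/2)) (fst (arc_fst n')) (snd (arc_fst n')) 0 (/2))
    as [d1 [Hd1 P1]]; [lra| |].
  { intros t Ht. rewrite <- Arc_lo by lra. apply Ne; lra. }
  destruct (orbit_dist_min (Arc n (/2)) (fst (arc_snd n')) (snd (arc_snd n')) (/2) 1)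
    as [d2 [Hd2 P2]]; [lra| |].
  { intros t Ht. rewrite <- Arc_hi by (assumption || lra). apply Ne; lra. }
  exists (Rmin d1 d2). split; [apply Rmin_pos; assumption|].
  intros t Ht. destruct (Rle_dec t (/2)).
  - rewrite (Arc_lo n' t) by assumption. eapply Rle_trans; [apply Rmin_l|]. apply P1; lra.
  - rewrite (Arc_hi n' t) by (assumption || lra). eapply Rle_trans; [apply Rmin_r|]. apply P2; lra.
Qed.

Lemma arc_dist_bounds : exists c0 D, 0 < c0 /\ 0 <= D /\
  (forall n n', (n <= 2 * k - 3)%nat -> (n' <= 2 * k - 3)%nat -> 0 <= arc_dist n n' <= D) /\
  (forall n n', (n <= 2 * k - 3)%nat -> (n' <= 2 * k - 3)%nat -> n <> n' -> c0 <= arc_dist n n').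
Proof.
  destruct ArcSet_bounded as [D [HD0 HD]].
  assert (Hb : forall n n', (n <= 2 * k - 3)%nat -> (n' <= 2 * k - 3)%nat ->
            0 <= arc_dist n n' <= D /\
            forall q, ArcSet n q -> dist_pt_set q (ArcSet n') <= arc_dist n n').
  { intros n n' hn hn'.
    apply (hausdorff_bounds _ _ _ _ D (ArcSet_Arc n 0 ltac:(lra)) (ArcSet_Arc n' 0 ltac:(lra))).
    intros; apply (HD n n'); assumption. }
  set (f := fun n n' => if Nat.eqb n n' then 1 else arc_dist n n').
  assert (Hpos : forall n n', (n <= 2 * k - 3)%nat -> (n' <= 2 * k - 3)%nat -> 0 < f n n').
  { intros n n' hn hn'. unfold f. destruct (Nat.eqb_spec n n') as [|ne]; [lra|].
    destruct (Arc_mid_far n n' hn hn' ne) as [d [Hd Pd]].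
    destruct (dist_pt_set_bounds (Arc n (/2)) (ArcSet n') _ (ArcSet_Arc n' 0 ltac:(lra)))
      as [_ [_ G]].
    assert (d <= dist_pt_set (Arc n (/2)) (ArcSet n')).
    { apply G. intros b [t [Ht ->]]. apply Pd; assumption. }
    pose proof (proj2 (Hb n n' hn hn') _ (ArcSet_Arc n (/2) ltac:(lra))). lra. }
  set (M := (2 * k - 3)%nat).
  exists (min_upto (fun n => min_upto (f n) M) M), D.
  split; [apply min_upto_pos; intros; apply min_upto_pos; intros; apply Hpos; assumption|].
  split; [assumption|]. split; [intros; apply Hb; assumption|].
  intros n n' hn hn' ne.
  eapply Rle_trans; [apply (min_upto_le _ M n hn)|].
  eapply Rle_trans; [apply (min_upto_le _ M n' hn')|].
  unfold f. destruct (Nat.eqb_spec n n'); [contradiction|lra].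
Qed.

(** * The conjugacy *)

Lemma image_rep g i : Omega k g ->
  image_on (rep k g) (IZR i) (IZR i + 1) = ArcSet (itin k g i).
Proof.
  intros HO. apply functional_extensionality. intros q.
  apply propositional_extensionality. split.
  - intros [t [Ht ->]]. exists (t - IZR i). split; [lra|].
    rewrite <- rep_Arc by (assumption || lra). f_equal; ring.
  - intros [t [Ht ->]]. exists (IZR i + t). split; [lra|]. rewrite rep_Arc; auto.
Qed.

Lemma rho_arc_dist g g' : Omega k g -> Omega k g' ->
  rho k g g' = sumZ (fun i => (/2) ^ Z.abs_nat i * arc_dist (itin k g i) (itin k g' i)).
Proof.
  intros H1 H2. unfold rho. f_equal. apply functional_extensionality. intros i.
  rewrite !image_rep by assumption. reflexivity.
Qed.

Lemma rho_term_bounds D g g' : Omega k g -> Omega k g' ->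
  (forall n n', (n <= 2 * k - 3)%nat -> (n' <= 2 * k - 3)%nat -> 0 <= arc_dist n n' <= D) ->
  forall i, 0 <= (/2) ^ Z.abs_nat i * arc_dist (itin k g i) (itin k g' i) <= D * (/2) ^ Z.abs_nat i.
Proof.
  intros HO HO' HD i. pose proof (pow_half_pos (Z.abs_nat i)).
  destruct (HD (itin k g i) (itin k g' i));
    [apply (itin_admissible g HO)|apply (itin_admissible g' HO')|].
  split; [apply Rmult_le_pos|]; nra.
Qed.

Lemma itin_continuous g : Omega k g -> forall e, 0 < e -> exists d, 0 < d /\
  forall g', Omega k g' -> rho k g g' < d -> dshift (itin k g) (itin k g') < e.
Proof.
  intros HO e He. destruct arc_dist_bounds as [c0 [D [Hc0 [HD0 [HD Hsep]]]]].
  destruct (pow_half_scaled_lt (INR (2 * k - 3)) e (pos_INR _) He) as [N HN].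
  exists (c0 * (/2) ^ N). split; [apply Rmult_lt_0_compat; [assumption|apply pow_half_pos]|].
  intros g' HO' Hr.
  destruct (itin_admissible g HO) as [Ha _]. destruct (itin_admissible g' HO') as [Hb _].
  enough (Ag : forall j, (Z.abs_nat j <= N)%nat -> itin k g j = itin k g' j).
  { pose proof (dshift_le_of_agree _ _ _ Ha Hb N Ag). lra. }
  intros j Hj. destruct (Nat.eq_dec (itin k g j) (itin k g' j)) as [|ne]; [assumption|]. exfalso.
  rewrite rho_arc_dist in Hr by assumption.
  pose proof (sumZ_ge_term _ _ (rho_term_bounds D g g' HO HO' HD) j).
  pose proof (Hsep _ _ (Ha j) (Hb j) ne). pose proof (pow_half_le _ _ Hj).
  pose proof (pow_half_pos (Z.abs_nat j)). pose proof (pow_half_pos N). nra.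
Qed.

Lemma itin_inv_continuous g : Omega k g -> forall e, 0 < e -> exists d, 0 < d /\
  forall g', Omega k g' -> dshift (itin k g) (itin k g') < d -> rho k g g' < e.
Proof.
  intros HO e He. destruct arc_dist_bounds as [c0 [D [Hc0 [HD0 [HD Hsep]]]]].
  destruct (pow_half_scaled_lt D e HD0 He) as [N HN].
  exists ((/2) ^ N). split; [apply pow_half_pos|].
  intros g' HO' Hd.
  destruct (itin_admissible g HO) as [Ha _]. destruct (itin_admissible g' HO') as [Hb _].
  pose proof (dshift_lt_agree _ _ _ Ha Hb N Hd) as Ag.
  rewrite rho_arc_dist by assumption.
  enough (sumZ (fun i => (/2) ^ Z.abs_nat i * arc_dist (itin k g i) (itin k g' i))
          <= 4 * D * (/2) ^ N) by lra.
  apply (sumZ_dom_tail _ _ _ (rho_term_bounds D g g' HO HO' HD)).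
  intros i Hi. rewrite (Ag i Hi), arc_dist_self. ring.
Qed.

Lemma admissible_subshift : subshift k admissible.
Proof.
  split; [|split].
  - intros a [Ha _] j. apply Ha.
  - intros a Hs Hcl. split; [assumption|].
    intros j. set (N := Nat.max (Z.abs_nat j) (Z.abs_nat (j + 1))).
    destruct (Hcl ((/2) ^ N) (pow_half_pos N)) as [b [[Hb Hbc] Hd]].
    pose proof (dshift_lt_agree _ _ _ Hs Hb N Hd) as Ag.
    rewrite (Ag j), (Ag (j + 1)%Z) by (unfold N; lia). apply Hbc.
  - intros a [Ha Hc]. split; [intros j; apply Ha|].
    intros j. unfold sigma_shift. apply Hc.
Qed.

End System.

Theorem theoremA (k : nat) (hk : (3 <= k)%nat) :
  compact2 (Lambda k) /\
  invariant (Xk k) (Yk k) (Lambda k) /\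
  (* T1 maps Omega_k to itself and each class has a representative
     through a tangency point at time 0 *)
  (forall g, Omega k g -> Omega k (T1 g)) /\
  (forall g, Omega k g ->
     exists g', Omega k g' /\ equiv_traj k g' g /\ IsTangPt k (g' 0)) /\
  (* topological conjugacy of T1bar on (Omega_k/~, rho_k) with sigma|K *)
  exists (K : (Z -> nat) -> Prop) (h : (R -> pt) -> (Z -> nat)),
    subshift k K /\
    (* h is well defined on the quotient *)
    (forall g1 g2, Omega k g1 -> Omega k g2 -> equiv_traj k g1 g2 -> h g1 = h g2) /\
    (* h maps into K, injectively on the quotient, onto K *)
    (forall g, Omega k g -> K (h g)) /\
    (forall g1 g2, Omega k g1 -> Omega k g2 -> h g1 = h g2 -> equiv_traj k g1 g2) /\
    (forall a, K a -> exists g, Omega k g /\ h g = a) /\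
    (* h continuous *)
    (forall g, Omega k g -> forall e, 0 < e -> exists d, 0 < d /\
       forall g', Omega k g' -> rho k g g' < d -> dshift (h g) (h g') < e) /\
    (* h^{-1} continuous *)
    (forall g, Omega k g -> forall e, 0 < e -> exists d, 0 < d /\
       forall g', Omega k g' -> dshift (h g) (h g') < d -> rho k g g' < e) /\
    (* conjugacy *)
    (forall g, Omega k g -> h (T1 g) = sigma_shift (h g)).
Proof.
  split; [apply Lambda_compact; assumption|].
  split; [apply Lambda_invariant; assumption|].
  split; [intros g HO; apply Omega_shift; assumption|].
  split; [intros g HO; apply rep_exists; assumption|].
  exists (admissible k), (itin k).
  split; [apply admissible_subshift; assumption|].
  split; [intros g1 g2 _ _ E; exact E|].
  split; [intros g HO; apply itin_admissible; assumption|].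
  split; [intros g1 g2 _ _ E; exact E|].
  split; [intros a Ha; exists (build k a);
          split; [apply build_Omega|apply itin_build]; assumption|].
  split; [apply itin_continuous; assumption|].
  split; [apply itin_inv_continuous; assumption|].
  intros g _. apply itin_T1.
Qed.
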